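(* For the controlled SIR-SI o.d.e.\ in the context, let $\sigma$ be an admissible control with $y_\sigma(T_\sigma)>\rho_{\max}$, and let $\hat\tau=\sup\{t\ge0:\sigma(t)>0\}\in(0,\infty]$. Then the time-threshold control $\sigma_{\hat\tau}$ satisfies $C_{\hat\tau}<C_\sigma$.
   Context: Fix $\lambda>0$, $\beta>0$, $\Gamma\in(0,1]$, initial values $0<x_{d0}\le d_0<1$, a target fraction $\alpha\in(0,1)$ and a tradeoff parameter $\psi>0$. Let $(b(t),d(t))$ solve $\dot b=\beta d$, $\dot d=-\beta d+\lambda\Gamma ds$ with $b(0)=0$, $d(0)=d_0$, where $s=1-b-d$; let $a(t)=b(t)+d(t)$ and $a(\infty)=\lim_{t\to\infty}a(t)$. An admissible control is a piecewise Lipschitz continuous function $\sigma:[0,\infty)\to[0,1]$. For such $\sigma$ let $(x_{b,\sigma},x_{d,\sigma},y_\sigma)$ solve $\dot x_b=\beta x_d+\lambda(b-x_b)(x+y)$, $\dot x_d=\Gamma\lambda(d-x_d)y+\Gamma\lambda x_ds+\lambda(d-x_d)(x+y)-\beta x_d$, $\dot y=-\Gamma\lambda dy+\lambda\sigma(t)(s-y)(x_b+y+(1-\Gamma)x_d)$, where $x=x_b+x_d$, with initial value $(0,x_{d0},0)$; write $x_\sigma=x_{b,\sigma}+x_{d,\sigma}$. Target time: $T_\sigma=\inf\{t\ge0:x_\sigma(t)\ge\alpha a(\infty)\}$. Cost: $C_\sigma=\psi y_\sigma(T_\sigma)+T_\sigma$. For $\tau\in[0,\infty]$ the time-threshold control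 is $\sigma_\tau(t)=1$ for $0\le t<\tau$ and $\sigma_\tau(t)=0$ for $t\ge\tau$ (so $\sigma_\infty\equiv1$); write $T_\tau,y_\tau,C_\tau$ for $T_{\sigma_\tau},y_{\sigma_\tau},C_{\sigma_\tau}$. $\rho_{\max}:=\sup_{\tau\ge0}y_\tau(T_\tau)$. *)

From Stdlib Require Import Reals.
Open Scope R_scope.

Definition cont_nonneg (f : R -> R) : Prop :=
  forall t, 0 <= t -> limit1_in f (fun s => 0 <= s) (f t) t.

Definition SolBD (lambda beta Gamma d0 : R) (b d : R -> R) : Prop :=
  b 0 = 0 /\ d 0 = d0 /\ cont_nonneg b /\ cont_nonneg d /\
  forall t, 0 < t ->
    derivable_pt_lim b t (beta * d t) /\
    derivable_pt_lim d t (- beta * d t + lambda * Gamma * d t * (1 - b t - d t)).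

(* (xb,xd,y) solves the controlled system for control sigma on [0,oo), with
   initial value (0, xd0, 0): continuous on [0,oo) and satisfying the o.d.e.
   at every t > 0 where sigma is continuous (for a piecewise Lipschitz
   control these exceptional points are locally finite). *)
Definition SolX (lambda beta Gamma xd0 : R) (b d sigma : R -> R)
    (xb xd y : R -> R) : Prop :=
  xb 0 = 0 /\ xd 0 = xd0 /\ y 0 = 0 /\
  cont_nonneg xb /\ cont_nonneg xd /\ cont_nonneg y /\
  forall t, 0 < t -> continuity_pt sigma t ->
    let s := 1 - b t - d t in
    let x := xb t + xd t in
    derivable_pt_lim xb t (beta * xd t + lambda * (b t - xb t) * (x + y t)) /\
    derivable_pt_lim xd t
      (Gamma * lambda * (d t - xd t) * y t + Gamma * lambda * xd t * s
       + lambda * (d t - xd t) * (x + y t) - beta * xd t) /\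
    derivable_pt_lim y t
      (- Gamma * lambda * d t * y t
       + lambda * sigma t * (s - y t) * (xb t + y t + (1 - Gamma) * xd t)).

Definition lim_infty (a : R -> R) (l : R) : Prop :=
  forall eps, eps > 0 -> exists M, forall t, t >= M -> Rabs (a t - l) < eps.

Definition admissible (sigma : R -> R) : Prop :=
  (forall t, 0 <= t -> 0 <= sigma t <= 1) /\
  exists tn : nat -> R,
    tn 0%nat = 0 /\ (forall n, tn n < tn (S n)) /\
    (forall M, exists n, tn n > M) /\
    forall n, exists L, forall s u,
      tn n <= s < tn (S n) -> tn n <= u < tn (S n) ->
      Rabs (sigma s - sigma u) <= L * Rabs (s - u).

(* Time-threshold control sigma_tau; None encodes tau = oo. *)
Definition threshold (tau : option R) (t : R) : R :=
  match tau with
  | None => 1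
  | Some r => if Rlt_dec t r then 1 else 0
  end.

(* T = inf { t >= 0 : x t >= A } (a real number; this forces the set to be
   nonempty). *)
Definition IsTargetTime (x : R -> R) (A T : R) : Prop :=
  (forall t, 0 <= t -> A <= x t -> T <= t) /\
  (forall T', (forall t, 0 <= t -> A <= x t -> T' <= t) -> T' <= T).

(* th = sup { t >= 0 : sigma t > 0 } in (-oo, oo]; None encodes oo. *)
Definition SupPosTime (sigma : R -> R) (th : option R) : Prop :=
  match th with
  | None => forall M, exists t, 0 <= t /\ M < t /\ sigma t > 0
  | Some r => is_lub (fun t => 0 <= t /\ sigma t > 0) r
  end.

Definition RhoSet (lambda beta Gamma xd0 alpha ainf : R) (b d : R -> R)
    (v : R) : Prop :=
  exists tau xb xd y T, 0 <= tau /\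
    SolX lambda beta Gamma xd0 b d (threshold (Some tau)) xb xd y /\
    IsTargetTime (fun t => xb t + xd t) (alpha * ainf) T /\
    v = y T.

From Stdlib Require Import Reals Lra Lia Psatz List Classical ClassicalEpsilon.
From Coquelicot Require Import Coquelicot.
Open Scope R_scope.

(* 1. Comparison.  The controlled system is cooperative and its rates increase
      with the control; since sigma <= sigma_tauhat, the trajectory under
      sigma_tauhat dominates the one under sigma componentwise, hence reaches
      the target no later: T' <= T.  Invariance and comparison both follow from
      a quasi-positivity principle for families of functions whose negative
      components have derivatives bounded below by their total negative part.
   2. Terminal value.  y'(T') <= rho_max: for a finite tauhat this is the
      definition of rho_max; for tauhat = oo we switch off at T' + 1, which
      requires a global solution of the switched-off system, built by Picard
      iteration for the (clamped, globally Lipschitz) planar o.d.e. for (xb, xd).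
   3. Hence psi y'(T') + T' <= psi rho_max + T < psi y(T) + T. *)

Definition cont_from (a : R) (f : R -> R) : Prop :=
  forall t, a <= t -> limit1_in f (fun s => a <= s) (f t) t.

Definition clip_left (a : R) (f : R -> R) : R -> R := fun t => f (Rmax a t).

Lemma clip_left_eq a f t : a <= t -> clip_left a f t = f t.
Proof. intros; unfold clip_left; rewrite Rmax_right; auto. Qed.

Lemma clip_left_continuous a f : cont_from a f -> forall t, continuity_pt (clip_left a f) t.
Proof.
  intros H t eps Heps.
  destruct (H (Rmax a t) (Rmax_l a t) eps Heps) as [alp [Ha Hal]].
  exists alp; split; auto. intros x [_ Hx]. apply Hal. split; [apply Rmax_l|].
  simpl in *. unfold R_dist in *.
  unfold Rmax; destruct (Rle_dec a x); destruct (Rle_dec a t);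
    repeat (apply Rabs_def1 || apply Rabs_def2 in Hx); try lra;
    apply Rabs_def2 in Hx; apply Rabs_def1; lra.
Qed.

Lemma clip_left_derivable a f x l :
  a < x -> derivable_pt_lim f x l -> derivable_pt_lim (clip_left a f) x l.
Proof.
  intros Hx Hd. apply is_derive_Reals. apply is_derive_Reals in Hd.
  apply (is_derive_ext_loc f); [|exact Hd].
  exists (mkposreal (x - a) ltac:(lra)). intros y Hy.
  unfold ball in Hy; simpl in Hy; unfold AbsRing_ball, abs, minus, plus, opp in Hy; simpl in Hy.
  apply Rabs_def2 in Hy. unfold clip_left. rewrite Rmax_right; lra.
Qed.

Lemma cont_from_interior a f t : cont_from a f -> a < t -> continuity_pt f t.
Proof.
  intros H Ht eps Heps. destruct (H t (Rlt_le _ _ Ht) eps Heps) as [alp [Ha Hal]].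
  exists (Rmin alp (t - a)); split; [apply Rmin_pos; lra|].
  intros x [_ Hx]. simpl in *. unfold R_dist in *.
  pose proof (Rmin_l alp (t - a)). pose proof (Rmin_r alp (t - a)).
  apply Hal. split; simpl; [apply Rabs_def2 in Hx|unfold R_dist]; lra.
Qed.

Lemma cont_from_const a c : cont_from a (fun _ => c).
Proof.
  intros t _ eps He. exists 1. split; [lra|]. intros. simpl. unfold R_dist.
  rewrite Rminus_diag, Rabs_R0. auto.
Qed.

Lemma cont_from_plus a f g : cont_from a f -> cont_from a g -> cont_from a (fun x => f x + g x).
Proof. intros Hf Hg t Ht. apply limit_plus; auto. Qed.

Lemma cont_from_minus a f g : cont_from a f -> cont_from a g -> cont_from a (fun x => f x - g x).
Proof. intros Hf Hg t Ht. apply limit_minus; auto. Qed.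

Lemma cont_from_later a c f : cont_from a f -> a <= c -> cont_from c f.
Proof.
  intros H Hac t Ht eps He. destruct (H t ltac:(lra) eps He) as [alp [Hal Hal2]].
  exists alp; split; auto. intros x [Hx1 Hx2]. apply Hal2. split; auto. unfold D_x in *. lra.
Qed.

Lemma cont_from_of_continuity a f : (forall t, a <= t -> continuity_pt f t) -> cont_from a f.
Proof.
  intros H t Ht eps He. destruct (H t Ht eps He) as [alp [Ha Hal]].
  exists alp; split; auto. intros x [_ Hx].
  destruct (Req_dec x t) as [->|Hne].
  - simpl. unfold R_dist. rewrite Rminus_diag, Rabs_R0. lra.
  - apply Hal. split; auto. split; [exact I|auto].
Qed.

Lemma lipschitz_cont_from a f K : 0 <= K ->
  (forall t t', a <= t -> a <= t' -> Rabs (f t - f t') <= K * Rabs (t - t')) ->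
  cont_from a f.
Proof.
  intros HK H t Ht eps Heps. exists (eps / (K + 1)). split; [apply Rdiv_lt_0_compat; lra|].
  intros x [Hx1 Hx2]. simpl in *. unfold R_dist in *.
  eapply Rle_lt_trans; [apply H; auto|].
  assert (K * Rabs (x - t) <= K * (eps / (K + 1))) by (apply Rmult_le_compat_l; lra).
  assert (K * (eps / (K + 1)) < eps).
  { apply Rmult_lt_reg_r with (K + 1); [lra|]. field_simplify; nra. }
  lra.
Qed.

Lemma cont_from_bounded a f K : cont_from a f ->
  exists M, 0 <= M /\ forall t, a <= t <= K -> Rabs (f t) <= M.
Proof.
  intros H. destruct (Rle_dec a K) as [aK|aK]; [|exists 0; split; intros; lra].
  destruct (continuity_ab_maj (fun t => Rabs (clip_left a f t)) a K aK) as [Mx [HM _]].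
  { intros c _. apply (continuity_pt_comp (clip_left a f) Rabs).
    - apply clip_left_continuous; auto.
    - apply Rcontinuity_abs. }
  exists (Rabs (clip_left a f Mx)). split; [apply Rabs_pos|].
  intros t Ht. rewrite <- (clip_left_eq a f t) by lra. apply HM; auto.
Qed.

Lemma cont_from_neg_near a f s : cont_from a f -> a <= s -> f s < 0 ->
  exists dl, 0 < dl /\ forall r, a <= r -> s - dl < r < s + dl -> f r < 0.
Proof.
  intros H Ha Hs. destruct (H s Ha (- f s)) as [alp [Hal Hr]]; [lra|].
  exists alp; split; auto. intros r Hr1 Hr2.
  destruct (Req_dec r s) as [->|Hne]; auto.
  assert (Hd : dist R_met (f r) (f s) < - f s).
  { apply Hr. split; auto. simpl; unfold R_dist. apply Rabs_def1; lra. }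
  simpl in Hd; unfold R_dist in Hd. apply Rabs_def2 in Hd. lra.
Qed.

Lemma mvt_lower_bound f C s t : s < t ->
  (forall x, s <= x <= t -> continuity_pt f x) ->
  (forall x, s < x < t -> exists f', derivable_pt_lim f x f' /\ -C <= f') ->
  -C * (t - s) <= f t - f s.
Proof.
  intros Hst Hc Hd.
  assert (pr1 : forall c, s < c < t -> derivable_pt f c).
  { intros c Pc. destruct (constructive_indefinite_description _ (Hd c Pc)) as [l [Hl _]].
    exists l; exact Hl. }
  assert (pr2 : forall c, s < c < t -> derivable_pt id c) by (intros; apply derivable_pt_id).
  destruct (MVT f id s t pr1 pr2 Hst Hc) as [c [P HP]].
  { intros; apply derivable_continuous_pt, derivable_pt_id. }
  destruct (Hd c P) as [f' [Hf' Hle]].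
  rewrite (derive_pt_eq_0 f c f' (pr1 c P) Hf') in HP.
  rewrite (derive_pt_eq_0 id c 1 (pr2 c P) (derivable_pt_lim_id c)) in HP.
  unfold id in HP. nra.
Qed.

Lemma increment_lower_bound (l : list R) : forall f C s t, s <= t ->
  (forall x, s <= x <= t -> continuity_pt f x) ->
  (forall x, s < x < t -> ~ In x l -> exists f', derivable_pt_lim f x f' /\ -C <= f') ->
  -C * (t - s) <= f t - f s.
Proof.
  induction l as [|p l IH]; intros f C s t Hst Hc Hd.
  - destruct (Req_dec s t) as [->|ne]; [lra|].
    apply mvt_lower_bound; [lra|exact Hc|]. intros x Hx; apply Hd; auto.
  - destruct (classic (s < p < t)) as [Hp|Hp].
    + assert (H1 : -C * (p - s) <= f p - f s).
      { apply IH; try lra; [intros; apply Hc; lra|].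
        intros x Hx Hn. apply Hd; [lra|]. intros [e|e]; [lra|tauto]. }
      assert (H2 : -C * (t - p) <= f t - f p).
      { apply IH; try lra; [intros; apply Hc; lra|].
        intros x Hx Hn. apply Hd; [lra|]. intros [e|e]; [lra|tauto]. }
      lra.
    + apply IH; auto. intros x Hx Hn. apply Hd; auto. intros [e|e]; [subst; tauto|tauto].
Qed.

Lemma increment_lower_bound_from a f C t : cont_from a f -> a <= t ->
  (forall x, a < x < t -> exists f', derivable_pt_lim f x f' /\ -C <= f') ->
  -C * (t - a) <= f t - f a.
Proof.
  intros Hc Ht Hd. rewrite <- (clip_left_eq a f t), <- (clip_left_eq a f a) by lra.
  apply (increment_lower_bound nil); auto; [intros; apply clip_left_continuous; auto|].
  intros x Hx _. destruct (Hd x Hx) as [f' [H1 H2]]. exists f'; split; auto.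
  apply clip_left_derivable; auto; lra.
Qed.

Definition negpart (x : R) : R := Rmax 0 (- x).

Fixpoint negsum (g : nat -> R -> R) (k : nat) (t : R) : R :=
  match k with O => 0 | S k' => negsum g k' t + negpart (g k' t) end.

Lemma negpart_ge0 x : 0 <= negpart x.
Proof. apply Rmax_l. Qed.
Lemma negpart_ge x : - x <= negpart x.
Proof. apply Rmax_r. Qed.
Lemma negpart_pos x : 0 <= x -> negpart x = 0.
Proof. intros; unfold negpart; rewrite Rmax_left; lra. Qed.
Lemma negpart_neg x : x <= 0 -> negpart x = - x.
Proof. intros; unfold negpart; rewrite Rmax_right; lra. Qed.

Lemma negsum_ge0 g k t : 0 <= negsum g k t.
Proof. induction k; simpl; [lra|]. pose proof (negpart_ge0 (g k t)); lra. Qed.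

Lemma negsum_le g k t M :
  (forall j, (j < k)%nat -> negpart (g j t) <= M) -> negsum g k t <= INR k * M.
Proof.
  induction k; intros H; simpl negsum; [simpl INR; lra|].
  rewrite S_INR. assert (negsum g k t <= INR k * M) by (apply IHk; intros; apply H; lia).
  assert (negpart (g k t) <= M) by (apply H; lia). lra.
Qed.

Lemma family_bounded a (g : nat -> R -> R) k K :
  (forall i, (i < k)%nat -> cont_from a (g i)) ->
  exists M, 0 <= M /\ forall j t, (j < k)%nat -> a <= t <= K -> Rabs (g j t) <= M.
Proof.
  induction k; intros H; [exists 0; split; [lra|intros; lia]|].
  destruct IHk as [M1 [HM1 HM1']]; [intros; apply H; lia|].
  destruct (cont_from_bounded a (g k) K) as [M2 [HM2 HM2']]; [apply H; lia|].
  exists (Rmax M1 M2). split; [apply (Rle_trans _ _ _ HM1 (Rmax_l _ _))|].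
  intros j t Hj Ht. destruct (Nat.eq_dec j k) as [->|ne].
  - eapply Rle_trans; [apply HM2'; auto|apply Rmax_r].
  - eapply Rle_trans; [apply HM1'; auto; lia|apply Rmax_l].
Qed.

(* The family [g] has quasi-positive rates on [a, +oo): on each bounded
   interval, except at finitely many points, a negative component has a
   derivative bounded below by a multiple of the total negative part.  This is
   the differential form of "the cone of nonnegative vectors is invariant". *)
Definition quasi_positive_rates (a : R) (g : nat -> R -> R) (k : nat) : Prop :=
  forall K, exists L l, 0 <= L /\
    forall t, a < t <= K -> ~ In t l -> forall i, (i < k)%nat -> g i t < 0 ->
      exists g', derivable_pt_lim (g i) t g' /\ - L * negsum g k t <= g'.

Section QuasiPositivity.
Variables (a : R) (g : nat -> R -> R) (k : nat).
Hypotheses (Hcont : forall i, (i < k)%nat -> cont_from a (g i))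
  (Hrates : quasi_positive_rates a g k).

(* Key estimate: starting from a time t0 where the family is nonnegative, on a
   window [t0, t0 + h] short enough that k L h <= 1/2, a bound M on the
   negative parts improves to M / 2.  Indeed, after the last zero s of a
   negative component, its derivative is >= - L k M, so it cannot drop below
   - L k M h >= - M / 2. *)
Lemma negpart_halving L l t0 h M K :
  a <= t0 -> t0 + h <= K -> 0 <= L -> 0 <= M -> 0 <= h -> INR k * L * h <= 1/2 ->
  (forall t, a < t <= K -> ~ In t l -> forall i, (i < k)%nat -> g i t < 0 ->
     exists g', derivable_pt_lim (g i) t g' /\ - L * negsum g k t <= g') ->
  (forall j, (j < k)%nat -> 0 <= g j t0) ->
  (forall j t, (j < k)%nat -> t0 <= t <= t0 + h -> negpart (g j t) <= M) ->
  forall j t, (j < k)%nat -> t0 <= t <= t0 + h -> negpart (g j t) <= M / 2.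
Proof.
  intros Ht0 HK HL HM Hh HkLh Hder Hstart Hbound j t Hj Ht.
  destruct (Rle_dec 0 (g j t)) as [Hp|Hp]; [rewrite negpart_pos; auto; lra|].
  apply Rnot_le_lt in Hp.
  assert (Htt0 : t0 < t) by (destruct (Req_dec t t0) as [->|]; [specialize (Hstart j Hj)|]; lra).
  set (Z := fun r => t0 <= r <= t /\ 0 <= g j r).
  destruct (completeness Z) as [s [Hsub Hslub]].
  { exists t. intros x [Hx _]; lra. }
  { exists t0. split; [lra|auto]. }
  assert (Hs0 : t0 <= s) by (apply Hsub; split; [lra|auto]).
  assert (Hs1 : s <= t) by (apply Hslub; intros x [Hx _]; lra).
  assert (Hgs : 0 <= g j s).
  { destruct (Req_dec s t0) as [->|ne]; auto.
    apply Rnot_lt_le. intro Hlt.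
    destruct (cont_from_neg_near a (g j) s) as [dl [Hdl Hdl2]]; auto; [lra|].
    assert (Hnub : ~ is_upper_bound Z (Rmax t0 (s - dl/2))).
    { intro Hu. apply Hslub in Hu. unfold Rmax in Hu; destruct (Rle_dec t0 (s - dl/2)); lra. }
    apply Hnub. intros x [Hx1 Hx2]. apply Rnot_lt_le. intro Hlt2.
    assert (x <= s) by (apply Hsub; split; auto).
    pose proof (Rmax_l t0 (s - dl / 2)). pose proof (Rmax_r t0 (s - dl / 2)).
    specialize (Hdl2 x ltac:(lra) ltac:(lra)). lra. }
  assert (Hst : s < t) by (destruct (Req_dec s t) as [->|]; lra).
  assert (Hneg : forall r, s < r <= t -> g j r < 0).
  { intros r Hr. apply Rnot_le_lt. intro Hr2.
    assert (r <= s) by (apply Hsub; split; auto; lra). lra. }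
  assert (HI : - (L * INR k * M) * (t - s) <= clip_left a (g j) t - clip_left a (g j) s).
  { apply (increment_lower_bound l); [lra|intros; apply clip_left_continuous; auto|].
    intros x Hx Hnl.
    destruct (Hder x ltac:(lra) Hnl j Hj (Hneg x ltac:(lra))) as [g' [Hg' Hg'2]].
    exists g'. split; [apply clip_left_derivable; auto; lra|].
    assert (negsum g k x <= INR k * M).
    { apply negsum_le. intros j' Hj'. apply Hbound; auto; lra. }
    assert (L * negsum g k x <= L * (INR k * M)) by (apply Rmult_le_compat_l; auto). lra. }
  rewrite !clip_left_eq in HI by lra. rewrite negpart_neg by lra.
  assert (INR k * L * h * M <= 1/2 * M) by (apply Rmult_le_compat_r; auto).
  assert (L * INR k * M * (t - s) <= L * INR k * M * h).
  { apply Rmult_le_compat_l; [|lra]. apply Rmult_le_pos; auto.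
    apply Rmult_le_pos; auto. apply pos_INR. }
  nra.
Qed.

(* Quasi-positivity principle: a family with quasi-positive rates which is
   nonnegative at a stays nonnegative on [a, +oo).  Otherwise let t0 be the
   supremum of the times up to which it is nonnegative; the halving estimate
   on a short window after t0 forces the supremum M of the negative parts on
   that window to satisfy M <= M / 2, so the family is nonnegative beyond t0. *)
Lemma quasi_positivity :
  (forall i, (i < k)%nat -> 0 <= g i a) ->
  forall i t, (i < k)%nat -> a <= t -> 0 <= g i t.
Proof.
  intros H0. apply NNPP. intro Hn.
  apply not_all_ex_not in Hn as [i Hn]. apply not_all_ex_not in Hn as [t1 Hn].
  apply imply_to_and in Hn as [Hik Hn]. apply imply_to_and in Hn as [Hat1 Hn].
  apply Rnot_le_lt in Hn.
  destruct (Hrates t1) as [L [l [HL HLd]]].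
  set (A := fun t => a <= t <= t1 /\
              forall s, a <= s <= t -> forall j, (j < k)%nat -> 0 <= g j s).
  assert (HAa : A a) by (split; [lra|intros s Hs j Hj; replace s with a by lra; auto]).
  destruct (completeness A) as [t0 [Hub Hlub]]; [exists t1; intros x [Hx _]; lra|exists a; auto|].
  assert (Ha0 : a <= t0) by (apply Hub; auto).
  assert (Ht01 : t0 <= t1) by (apply Hlub; intros x [Hx _]; lra).
  assert (Before : forall s, a <= s < t0 -> forall j, (j < k)%nat -> 0 <= g j s).
  { intros s Hs j Hj. apply NNPP. intro Hneg.
    assert (Hs' : is_upper_bound A s).
    { intros x [Hx1 Hx2]. apply Rnot_lt_le. intro Hlt. apply Hneg. apply Hx2; auto; lra. }
    apply Hlub in Hs'. lra. }
  assert (At : forall j, (j < k)%nat -> 0 <= g j t0).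
  { intros j Hj. destruct (Req_dec t0 a) as [->|ne]; auto.
    apply Rnot_lt_le. intro Hlt.
    destruct (cont_from_neg_near a (g j) t0) as [dl [Hdl Hdl2]]; auto.
    pose (r := Rmax a (t0 - dl/2)).
    assert (a <= r) by apply Rmax_l. assert (t0 - dl/2 <= r) by apply Rmax_r.
    assert (r < t0) by (unfold r, Rmax; destruct (Rle_dec a (t0 - dl/2)); lra).
    specialize (Hdl2 r ltac:(auto) ltac:(lra)). specialize (Before r ltac:(lra) j Hj). lra. }
  assert (Ht0 : t0 < t1) by (destruct (Req_dec t0 t1) as [->|]; [specialize (At i Hik)|]; lra).
  set (h := Rmin (t1 - t0) (1 / (2 * (INR k * L + 1)))).
  assert (HkL : 0 <= INR k * L) by (apply Rmult_le_pos; auto; apply pos_INR).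
  assert (Hh : 0 < h) by (apply Rmin_pos; [lra|apply Rdiv_lt_0_compat; lra]).
  assert (Hh1 : h <= t1 - t0) by apply Rmin_l.
  assert (Hh3 : INR k * L * h <= 1/2).
  { assert (Hh2 : h <= 1 / (2 * (INR k * L + 1))) by apply Rmin_r.
    apply Rmult_le_compat_l with (r := INR k * L) in Hh2; auto.
    eapply Rle_trans; [exact Hh2|].
    apply Rmult_le_reg_l with (r := 2 * (INR k * L + 1)); [lra|]. field_simplify; lra. }
  destruct (family_bounded a g k t1 Hcont) as [B [_ HB]].
  set (S := fun v => exists j t, (j < k)%nat /\ t0 <= t <= t0 + h /\ v = negpart (g j t)).
  destruct (completeness S) as [M [HMub HMlub]].
  { exists (B + 1). intros v [j [t [Hj [Ht ->]]]]. specialize (HB j t Hj ltac:(lra)).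
    unfold negpart. apply Rmax_lub; [pose proof (Rabs_pos (g j t)); lra|].
    pose proof (Rle_abs (- g j t)) as Hab. rewrite Rabs_Ropp in Hab. lra. }
  { exists (negpart (g i t0)), i, t0. repeat split; auto; lra. }
  assert (HM0 : 0 <= M).
  { eapply Rle_trans; [apply (negpart_ge0 (g i t0))|]. apply HMub. exists i, t0. repeat split; auto; lra. }
  assert (Half : forall j t, (j < k)%nat -> t0 <= t <= t0 + h -> negpart (g j t) <= M / 2).
  { apply (negpart_halving L l t0 h M t1); auto; try lra.
    intros j t Hj Ht. apply HMub. exists j, t. auto. }
  assert (HMle : M <= M / 2) by (apply HMlub; intros v [j [t [Hj [Ht ->]]]]; apply Half; auto).
  assert (HA : A (t0 + h)).
  { split; [lra|]. intros s Hs j Hj. destruct (Rlt_dec s t0); [apply Before; auto; lra|].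
    assert (negpart (g j s) <= M / 2) by (apply Half; auto; lra).
    pose proof (negpart_ge (g j s)). lra. }
  apply Hub in HA. lra.
Qed.

End QuasiPositivity.

(* On every bounded interval of (0, +oo), sigma is continuous off a finite set:
   this is all the regularity of controls that the comparison argument uses. *)
Definition piecewise_continuous (sigma : R -> R) : Prop :=
  forall K, exists l : list R, forall t, 0 < t <= K -> ~ In t l -> continuity_pt sigma t.

Lemma breakpoint_locate (tn : nat -> R) : tn 0%nat = 0 -> (forall n, tn n < tn (S n)) ->
  forall n t, 0 <= t < tn n -> exists m, (m < n)%nat /\ tn m <= t < tn (S m).
Proof.
  intros H0 Hinc. induction n; intros t Ht; [lra|].
  destruct (Rlt_dec t (tn n)).
  - destruct (IHn t) as [m [Hm1 Hm2]]; [lra|]. exists m; split; auto.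
  - exists n. split; [lia|lra].
Qed.

Lemma admissible_piecewise_continuous sigma : admissible sigma -> piecewise_continuous sigma.
Proof.
  intros [_ [tn [H0 [Hinc [Hunb Hlip]]]]] K.
  destruct (Hunb K) as [n Hn].
  exists (map tn (seq 0 (S n))). intros t Ht Hnin.
  destruct (breakpoint_locate tn H0 Hinc n t) as [m [Hm1 Hm2]]; [lra|].
  assert (Hlt : tn m < t).
  { destruct Hm2 as [[Hlt|He] _]; auto. exfalso. apply Hnin. rewrite <- He.
    apply in_map. apply in_seq. lia. }
  destruct (Hlip m) as [L HL].
  intros eps Heps. set (r := Rmin (t - tn m) (tn (S m) - t)).
  assert (Hr : 0 < r) by (apply Rmin_pos; lra).
  assert (HL1 : 0 < Rabs L + 1) by (pose proof (Rabs_pos L); lra).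
  exists (Rmin r (eps / (Rabs L + 1))).
  split; [apply Rmin_pos; [lra|apply Rdiv_lt_0_compat; auto]|].
  intros x [_ Hx]. simpl in *. unfold R_dist in *.
  pose proof (Rmin_l r (eps / (Rabs L + 1))). pose proof (Rmin_r r (eps / (Rabs L + 1))).
  pose proof (Rmin_l (t - tn m) (tn (S m) - t)). pose proof (Rmin_r (t - tn m) (tn (S m) - t)).
  assert (Hx' := Hx). apply Rabs_def2 in Hx'.
  eapply Rle_lt_trans; [apply HL; unfold r in *; lra|].
  assert (L * Rabs (x - t) <= Rabs L * (eps / (Rabs L + 1))).
  { apply Rle_trans with (Rabs L * Rabs (x - t)).
    - apply Rmult_le_compat_r; [apply Rabs_pos|apply Rle_abs].
    - apply Rmult_le_compat_l; [apply Rabs_pos|lra]. }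
  assert (Rabs L * (eps / (Rabs L + 1)) < eps).
  { apply Rmult_lt_reg_r with (Rabs L + 1); [lra|]. field_simplify; [|lra].
    pose proof (Rabs_pos L); nra. }
  lra.
Qed.

Lemma threshold_range tau t : 0 <= threshold tau t <= 1.
Proof. destruct tau as [r|]; simpl; [destruct (Rlt_dec t r)|]; lra. Qed.

Lemma threshold_continuous_off r t : t <> r -> continuity_pt (threshold (Some r)) t.
Proof.
  intros Hne eps Heps. exists (Rabs (t - r)). split; [apply Rabs_pos_lt; lra|].
  intros x [_ Hx]. simpl in *. unfold R_dist in *.
  apply Rabs_def2 in Hx. unfold Rabs in Hx.
  destruct (Rcase_abs (t - r)); destruct (Rlt_dec x r); destruct (Rlt_dec t r);
    try (rewrite Rminus_diag, Rabs_R0; lra); lra.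
Qed.

Lemma threshold_discontinuous r : ~ continuity_pt (threshold (Some r)) r.
Proof.
  intro H. destruct (H (1/2) ltac:(lra)) as [alp [Ha Hal]].
  specialize (Hal (r - alp/2)). simpl in Hal. unfold R_dist, threshold in Hal.
  destruct (Rlt_dec (r - alp/2) r); [|lra]. destruct (Rlt_dec r r); [lra|].
  assert (Habs : Rabs (r - alp / 2 - r) < alp) by (rewrite Rabs_left by lra; lra).
  assert (HD : D_x no_cond r (r - alp / 2)) by (split; [exact I|lra]).
  specialize (Hal (conj HD Habs)). rewrite Rabs_right in Hal; lra.
Qed.

Lemma threshold_none_continuous t : continuity_pt (threshold None) t.
Proof. apply continuity_pt_const. intros u v; auto. Qed.

Lemma threshold_piecewise_continuous tau : piecewise_continuous (threshold tau).
Proof.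
  intros K. destruct tau as [r|].
  - exists (r :: nil). intros t _ Hn. apply threshold_continuous_off.
    intros ->; apply Hn; left; auto.
  - exists nil. intros. apply threshold_none_continuous.
Qed.

Lemma threshold_dominates sigma tauhat : (forall t, 0 <= t -> 0 <= sigma t <= 1) ->
  SupPosTime sigma tauhat ->
  forall t, 0 < t -> continuity_pt (threshold tauhat) t -> sigma t <= threshold tauhat t.
Proof.
  intros Hs Htau t Ht Hc. specialize (Hs t ltac:(lra)). destruct tauhat as [r|]; simpl; [|lra].
  destruct (Rlt_dec t r); [lra|].
  destruct (Req_dec t r) as [->|Hne]; [exfalso; apply (threshold_discontinuous r); auto|].
  apply Rnot_lt_le. intro Hp. destruct Htau as [Hub _].
  assert (t <= r) by (apply Hub; split; lra). lra.
Qed.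

Lemma sup_pos_time_nonneg sigma r : SupPosTime sigma (Some r) -> 0 <= r.
Proof.
  intros [Hu Hl]. destruct (classic (exists t, 0 <= t /\ sigma t > 0)) as [[t Ht]|Hn].
  - assert (t <= r) by (apply Hu; auto). lra.
  - apply Rnot_lt_le. intro Hr. assert (r <= r - 1); [|lra].
    apply Hl. intros t Ht. exfalso. apply Hn. exists t; auto.
Qed.

Lemma target_nonneg x A T : IsTargetTime x A T -> 0 <= T.
Proof. intros [_ H2]. apply H2. auto. Qed.

Lemma target_exists_time x A T : IsTargetTime x A T -> exists t, 0 <= t /\ A <= x t.
Proof.
  intros [_ H2]. apply NNPP. intro Hn. assert (T + 1 <= T); [|lra].
  apply H2. intros t Ht HA. exfalso; apply Hn; exists t; auto.
Qed.

Lemma target_reached x A T : cont_from 0 x -> IsTargetTime x A T -> A <= x T.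
Proof.
  intros Hc HT. pose proof (target_nonneg _ _ _ HT) as HT0. destruct HT as [H1 H2].
  apply Rnot_lt_le. intro Hlt.
  destruct (cont_from_neg_near 0 (fun t => x t - A) T) as [dl [Hdl Hdl2]]; auto; try lra.
  { apply cont_from_minus; auto. apply cont_from_const. }
  assert (T + dl/2 <= T); [|lra].
  apply H2. intros t Ht HA. assert (T <= t) by (apply H1; auto).
  apply Rnot_lt_le. intro. specialize (Hdl2 t Ht ltac:(lra)). lra.
Qed.

Lemma target_time_monotone (x x' : R -> R) A T : IsTargetTime x A T ->
  (forall t, 0 <= t -> x t <= x' t) ->
  exists T', IsTargetTime x' A T' /\ T' <= T.
Proof.
  intros HT Hle. destruct (target_exists_time _ _ _ HT) as [t0 [Ht0 HA0]].
  set (E := fun T'' => forall t, 0 <= t -> A <= x' t -> T'' <= t).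
  destruct (completeness E) as [T' [Hub Hlub]].
  { exists t0. intros T'' HE. apply HE; auto. specialize (Hle t0 Ht0). lra. }
  { exists 0. intros t Ht _; auto. }
  assert (HT' : IsTargetTime x' A T').
  { split; [intros t Ht HA; apply Hlub; intros T'' HE; apply HE; auto|].
    intros T'' HE. apply Hub; auto. }
  exists T'. split; auto. destruct HT as [_ H2]. apply H2. intros t Ht HA.
  destruct HT' as [H1' _]. apply H1'; auto. specialize (Hle t Ht). lra.
Qed.

Lemma target_time_local (x x'' : R -> R) A T tau : cont_from 0 x -> IsTargetTime x A T ->
  T < tau -> (forall t, 0 <= t <= tau -> x'' t = x t) -> IsTargetTime x'' A T.
Proof.
  intros Hc HT Htau Heq. pose proof (target_reached _ _ _ Hc HT).
  pose proof (target_nonneg _ _ _ HT). destruct HT as [H1 H2]. split.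
  - intros t Ht HA. destruct (Rle_dec t tau); [|lra]. apply H1; auto. rewrite <- Heq; auto.
  - intros T'' HE. apply HE; auto. rewrite Heq; auto; lra.
Qed.

Lemma rate_own c p Q : p < 0 -> - Q <= c <= Q -> - Q * negpart p <= c * p.
Proof. intros Hp Hc. rewrite negpart_neg by lra. nra. Qed.

Lemma rate_cross c p Q : 0 <= c <= Q -> - Q * negpart p <= c * p.
Proof. intros. pose proof (negpart_ge p). pose proof (negpart_ge0 p). nra. Qed.

Lemma rate_product c p q M Q : 0 <= c -> c * M <= Q -> Rabs p <= M -> Rabs q <= M ->
  - Q * (negpart p + negpart q) <= c * (p * q).
Proof.
  intros Hc HcM Hp Hq. apply Rabs_le_between in Hp, Hq.
  pose proof (negpart_ge0 p). pose proof (negpart_ge0 q).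
  assert (p * q >= - M * (negpart p + negpart q)).
  { destruct (Rle_dec 0 p); destruct (Rle_dec 0 q).
    - nra.
    - rewrite (negpart_pos p), (negpart_neg q) by lra. nra.
    - rewrite (negpart_neg p), (negpart_pos q) by lra. nra.
    - rewrite (negpart_neg p), (negpart_neg q) by lra. nra. }
  nra.
Qed.

Lemma bound_mul a A x X : 0 <= a <= A -> - X <= x <= X -> - (A * X) <= a * x <= A * X.
Proof. intros. assert (0 <= X) by lra. split; nra. Qed.

Section Epidemic.
Variables (lambda beta Gamma d0 : R) (b d : R -> R).
Hypotheses (Hlam : 0 < lambda) (Hbeta : 0 < beta) (HG : 0 < Gamma <= 1)
  (Hd0 : 0 < d0 < 1) (Hbd : SolBD lambda beta Gamma d0 b d).

Definition epidemic_family (j : nat) : R -> R :=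
  match j with O => d | _ => fun t => 1 - b t - d t end.

Lemma epidemic_family_cont : forall i, (i < 2)%nat -> cont_from 0 (epidemic_family i).
Proof.
  destruct Hbd as [_ [_ [Hcb [Hcd _]]]].
  intros [|[|i]] Hi; simpl; [exact Hcd| |lia].
  apply cont_from_minus; [apply cont_from_minus; [apply cont_from_const|]|]; auto.
Qed.

(* d' = (- beta + lambda Gamma s) d and s' = - lambda Gamma d s: each rate is a
   bounded multiple of the quantity itself. *)
Lemma epidemic_rates : quasi_positive_rates 0 epidemic_family 2.
Proof.
  destruct Hbd as [_ [_ [_ [_ Hder]]]].
  intros K. destruct (family_bounded 0 epidemic_family 2 K epidemic_family_cont) as [M [HM0 HM]].
  set (L := beta + lambda * Gamma * M).
  assert (HlG : 0 <= lambda * Gamma) by nra.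
  exists L, nil. split; [unfold L; nra|]. intros t Ht _ i Hi Hneg.
  destruct (Hder t ltac:(lra)) as [Hdb Hdd].
  pose proof (proj1 (Rabs_le_between _ _) (HM 0%nat t ltac:(lia) ltac:(lra))) as Bd.
  pose proof (proj1 (Rabs_le_between _ _) (HM 1%nat t ltac:(lia) ltac:(lra))) as Bs.
  simpl in Bd, Bs |- *. pose proof (negpart_ge0 (d t)). pose proof (negpart_ge0 (1 - b t - d t)).
  destruct i as [|[|i]]; simpl in Hneg; [| |lia].
  - eexists; split; [exact Hdd|].
    pose proof (bound_mul _ _ _ _ (conj HlG (Rle_refl _)) Bs).
    pose proof (rate_own (- beta + lambda * Gamma * (1 - b t - d t)) (d t) L Hneg ltac:(unfold L; lra)).
    assert (0 <= L) by (unfold L; nra). nra.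
  - eexists; split.
    { apply derivable_pt_lim_minus; [apply derivable_pt_lim_minus|]; eauto.
      apply derivable_pt_lim_const. }
    pose proof (bound_mul _ _ _ _ (conj HlG (Rle_refl _)) Bd).
    pose proof (rate_own (- (lambda * Gamma * d t)) (1 - b t - d t) L Hneg ltac:(unfold L; lra)).
    assert (0 <= L) by (unfold L; nra). nra.
Qed.

Lemma epidemic_family_nonneg i t : (i < 2)%nat -> 0 <= t -> 0 <= epidemic_family i t.
Proof.
  destruct Hbd as [Hb0 [Hdd0 _]].
  intros Hi Ht. apply (quasi_positivity 0 epidemic_family 2); auto.
  - exact epidemic_family_cont.
  - exact epidemic_rates.
  - intros [|[|j]] Hj; simpl; [lra|rewrite Hb0, Hdd0; lra|lia].
Qed.

(* Moreover b >= 0, since b' = beta d >= 0. *)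
Lemma epidemic_nonneg t : 0 <= t -> 0 <= b t /\ 0 <= d t /\ 0 <= 1 - b t - d t.
Proof.
  intros Ht. pose proof (epidemic_family_nonneg 0 t ltac:(lia) Ht) as Pd.
  pose proof (epidemic_family_nonneg 1 t ltac:(lia) Ht) as Ps. simpl in Pd, Ps.
  repeat split; auto.
  destruct Hbd as [Hb0 [_ [Hcb [_ Hder]]]].
  assert (-0 * (t - 0) <= b t - b 0); [|lra].
  apply increment_lower_bound_from; auto. intros x Hx. exists (beta * d x).
  split; [apply Hder; lra|].
  pose proof (epidemic_family_nonneg 0 x ltac:(lia) ltac:(lra)). simpl in *. nra.
Qed.

End Epidemic.

Definition sir_negtotal (B D XB XD Y : R) : R :=
  negpart XB + negpart XD + negpart Y + negpart (B - XB) + negpart (D - XD)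
  + negpart (1 - B - D - Y).

Section ControlledRates.
(* Pointwise values of b, d, xb, xd, y and of the control at some time. *)
Variables (lambda beta Gamma B D XB XD Y S M Q : R).
Hypotheses (Hlam : 0 < lambda) (Hbeta : 0 < beta) (HG : 0 < Gamma <= 1) (HS : 0 <= S <= 1)
  (A0 : Rabs XB <= M) (A1 : Rabs XD <= M) (A2 : Rabs Y <= M)
  (A3 : Rabs (B - XB) <= M) (A4 : Rabs (D - XD) <= M) (A5 : Rabs (1 - B - D - Y) <= M)
  (HQ : (beta + lambda) * (6 * M + 1) <= Q).

Lemma rate_constants : 0 <= M /\ 0 <= Q /\ beta <= Q /\ 6 * (lambda * M) + beta <= Q.
Proof. assert (0 <= M) by (pose proof (Rabs_pos XB); lra). repeat split; nra. Qed.

Lemma negtotal_terms :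
  0 <= Q * negpart XB /\ 0 <= Q * negpart XD /\ 0 <= Q * negpart Y /\
  0 <= Q * negpart (B - XB) /\ 0 <= Q * negpart (D - XD) /\ 0 <= Q * negpart (1 - B - D - Y).
Proof.
  destruct rate_constants as [_ [HQ0 _]].
  repeat split; apply Rmult_le_pos; auto; apply negpart_ge0.
Qed.

Lemma rate_xb : XB < 0 ->
  - (20 * Q) * sir_negtotal B D XB XD Y <= beta * XD + lambda * (B - XB) * (XB + XD + Y).
Proof.
  intros _. destruct rate_constants as [HM0 [HQ0 [HbQ HlQ]]]. pose proof negtotal_terms.
  unfold sir_negtotal.
  replace (beta * XD + lambda * (B - XB) * (XB + XD + Y)) with
    (beta * XD + lambda * ((B - XB) * XB) + lambda * ((B - XB) * XD) + lambda * ((B - XB) * Y)) by ring.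
  pose proof (rate_cross beta XD Q ltac:(lra)).
  pose proof (rate_product lambda (B - XB) XB M Q ltac:(lra) ltac:(nra) A3 A0).
  pose proof (rate_product lambda (B - XB) XD M Q ltac:(lra) ltac:(nra) A3 A1).
  pose proof (rate_product lambda (B - XB) Y M Q ltac:(lra) ltac:(nra) A3 A2).
  lra.
Qed.

Lemma rate_xd : XD < 0 ->
  - (20 * Q) * sir_negtotal B D XB XD Y <=
  Gamma * lambda * (D - XD) * Y + Gamma * lambda * XD * (1 - B - D)
  + lambda * (D - XD) * (XB + XD + Y) - beta * XD.
Proof.
  intros Hneg. destruct rate_constants as [HM0 [HQ0 [HbQ HlQ]]]. pose proof negtotal_terms.
  unfold sir_negtotal.
  replace (Gamma * lambda * (D - XD) * Y + Gamma * lambda * XD * (1 - B - D) +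
      lambda * (D - XD) * (XB + XD + Y) - beta * XD) with
    ((Gamma * lambda) * ((D - XD) * Y) + (Gamma * lambda) * (XD * (1 - B - D - Y))
     + (Gamma * lambda) * (XD * Y) + lambda * ((D - XD) * XB) + lambda * ((D - XD) * XD)
     + lambda * ((D - XD) * Y) + (- beta) * XD) by ring.
  assert (HGl : Gamma * lambda * M <= Q) by nra.
  pose proof (rate_product (Gamma * lambda) (D - XD) Y M Q ltac:(nra) HGl A4 A2).
  pose proof (rate_product (Gamma * lambda) XD (1 - B - D - Y) M Q ltac:(nra) HGl A1 A5).
  pose proof (rate_product (Gamma * lambda) XD Y M Q ltac:(nra) HGl A1 A2).
  pose proof (rate_product lambda (D - XD) XB M Q ltac:(lra) ltac:(nra) A4 A0).
  pose proof (rate_product lambda (D - XD) XD M Q ltac:(lra) ltac:(nra) A4 A1).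
  pose proof (rate_product lambda (D - XD) Y M Q ltac:(lra) ltac:(nra) A4 A2).
  pose proof (rate_own (- beta) XD Q Hneg ltac:(lra)).
  lra.
Qed.

Lemma rate_y : Y < 0 ->
  - (20 * Q) * sir_negtotal B D XB XD Y <=
  - Gamma * lambda * D * Y + lambda * S * (1 - B - D - Y) * (XB + Y + (1 - Gamma) * XD).
Proof.
  intros Hneg. destruct rate_constants as [HM0 [HQ0 [HbQ HlQ]]]. pose proof negtotal_terms.
  unfold sir_negtotal.
  replace (- Gamma * lambda * D * Y + lambda * S * (1 - B - D - Y) * (XB + Y + (1 - Gamma) * XD)) with
    ((- Gamma * lambda * D) * Y + (lambda * S) * ((1 - B - D - Y) * XB)
     + (lambda * S) * ((1 - B - D - Y) * Y) + (lambda * S * (1 - Gamma)) * ((1 - B - D - Y) * XD))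
    by ring.
  assert (HlS0 : 0 <= lambda * S) by nra.
  assert (HlS1 : 0 <= lambda * S * (1 - Gamma)) by (apply Rmult_le_pos; lra).
  assert (HlSM : lambda * S * M <= Q).
  { assert (lambda * S * M <= lambda * M) by (apply Rmult_le_compat_r; nra). lra. }
  assert (HlSGM : lambda * S * (1 - Gamma) * M <= Q).
  { assert (lambda * S * (1 - Gamma) * M <= lambda * S * M); [|lra].
    apply Rmult_le_compat_r; [lra|]. nra. }
  pose proof (rate_product (lambda * S) (1 - B - D - Y) XB M Q HlS0 HlSM A5 A0).
  pose proof (rate_product (lambda * S) (1 - B - D - Y) Y M Q HlS0 HlSM A5 A2).
  pose proof (rate_product (lambda * S * (1 - Gamma)) (1 - B - D - Y) XD M Q HlS1 HlSGM A5 A1).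
  apply Rabs_le_between in A1, A4.
  pose proof (bound_mul (Gamma * lambda) lambda D (2 * M) ltac:(split; nra) ltac:(lra)).
  pose proof (rate_own (- Gamma * lambda * D) Y Q Hneg ltac:(split; lra)).
  lra.
Qed.

Lemma rate_b_xb : B - XB < 0 ->
  - (20 * Q) * sir_negtotal B D XB XD Y <=
  beta * D - (beta * XD + lambda * (B - XB) * (XB + XD + Y)).
Proof.
  intros Hneg. destruct rate_constants as [HM0 [HQ0 [HbQ HlQ]]]. pose proof negtotal_terms.
  unfold sir_negtotal.
  replace (beta * D - (beta * XD + lambda * (B - XB) * (XB + XD + Y))) with
    (beta * (D - XD) + (- (lambda * (XB + XD + Y))) * (B - XB)) by ring.
  pose proof (rate_cross beta (D - XD) Q ltac:(lra)).
  apply Rabs_le_between in A0, A1, A2.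
  pose proof (bound_mul lambda lambda (XB + XD + Y) (3 * M) ltac:(lra) ltac:(lra)).
  pose proof (rate_own (- (lambda * (XB + XD + Y))) (B - XB) Q Hneg ltac:(split; lra)).
  lra.
Qed.

Lemma rate_d_xd : D - XD < 0 ->
  - (20 * Q) * sir_negtotal B D XB XD Y <=
  - beta * D + lambda * Gamma * D * (1 - B - D)
  - (Gamma * lambda * (D - XD) * Y + Gamma * lambda * XD * (1 - B - D)
     + lambda * (D - XD) * (XB + XD + Y) - beta * XD).
Proof.
  intros Hneg. destruct rate_constants as [HM0 [HQ0 [HbQ HlQ]]]. pose proof negtotal_terms.
  unfold sir_negtotal.
  replace (- beta * D + lambda * Gamma * D * (1 - B - D)
    - (Gamma * lambda * (D - XD) * Y + Gamma * lambda * XD * (1 - B - D)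
       + lambda * (D - XD) * (XB + XD + Y) - beta * XD)) with
    ((- beta + Gamma * lambda * (1 - B - D) - Gamma * lambda * Y - lambda * (XB + XD + Y)) * (D - XD))
    by ring.
  assert (HGl : 0 <= Gamma * lambda <= lambda) by (split; nra).
  apply Rabs_le_between in A0, A1, A2, A5.
  pose proof (bound_mul lambda lambda (XB + XD + Y) (3 * M) ltac:(lra) ltac:(lra)).
  pose proof (bound_mul (Gamma * lambda) lambda (1 - B - D) (2 * M) HGl ltac:(lra)).
  pose proof (bound_mul (Gamma * lambda) lambda Y M HGl ltac:(lra)).
  pose proof (rate_own (- beta + Gamma * lambda * (1 - B - D) - Gamma * lambda * Y
                        - lambda * (XB + XD + Y)) (D - XD) Q Hneg ltac:(split; lra)).
  lra.
Qed.

Lemma rate_s_y : 1 - B - D - Y < 0 ->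
  - (20 * Q) * sir_negtotal B D XB XD Y <=
  0 - beta * D - (- beta * D + lambda * Gamma * D * (1 - B - D))
  - (- Gamma * lambda * D * Y + lambda * S * (1 - B - D - Y) * (XB + Y + (1 - Gamma) * XD)).
Proof.
  intros Hneg. destruct rate_constants as [HM0 [HQ0 [HbQ HlQ]]]. pose proof negtotal_terms.
  unfold sir_negtotal.
  replace (0 - beta * D - (- beta * D + lambda * Gamma * D * (1 - B - D))
    - (- Gamma * lambda * D * Y + lambda * S * (1 - B - D - Y) * (XB + Y + (1 - Gamma) * XD))) with
    ((- (lambda * Gamma * D) - lambda * S * (XB + Y + (1 - Gamma) * XD)) * (1 - B - D - Y)) by ring.
  assert (HGl : 0 <= lambda * Gamma <= lambda) by (split; nra).
  assert (HlS : 0 <= lambda * S <= lambda) by (split; nra).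
  apply Rabs_le_between in A0, A1, A2, A4.
  pose proof (bound_mul (1 - Gamma) 1 XD M ltac:(lra) ltac:(lra)).
  pose proof (bound_mul (lambda * S) lambda (XB + Y + (1 - Gamma) * XD) (3 * M) HlS ltac:(lra)).
  pose proof (bound_mul (lambda * Gamma) lambda D (2 * M) HGl ltac:(lra)).
  pose proof (rate_own (- (lambda * Gamma * D) - lambda * S * (XB + Y + (1 - Gamma) * XD))
                (1 - B - D - Y) Q Hneg ltac:(split; lra)).
  lra.
Qed.

End ControlledRates.

Section Controlled.
Variables (lambda beta Gamma d0 xd0 : R) (b d sigma xb xd y : R -> R).
Hypotheses (Hlam : 0 < lambda) (Hbeta : 0 < beta) (HG : 0 < Gamma <= 1)
  (Hx0 : 0 < xd0 <= d0) (Hd0 : d0 < 1) (Hbd : SolBD lambda beta Gamma d0 b d)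
  (Hsig : forall t, 0 <= t -> 0 <= sigma t <= 1) (Hpc : piecewise_continuous sigma)
  (Hsol : SolX lambda beta Gamma xd0 b d sigma xb xd y).

Definition controlled_family (j : nat) : R -> R :=
  match j with
  | O => xb | 1 => xd | 2 => y | 3 => fun t => b t - xb t | 4 => fun t => d t - xd t
  | _ => fun t => 1 - b t - d t - y t
  end.

Lemma controlled_family_cont i : (i < 6)%nat -> cont_from 0 (controlled_family i).
Proof.
  destruct Hbd as [_ [_ [Hcb [Hcd _]]]]. destruct Hsol as [_ [_ [_ [Hcxb [Hcxd [Hcy _]]]]]].
  destruct i as [|[|[|[|[|[|i]]]]]]; simpl; intros Hi; try lia; auto;
    repeat apply cont_from_minus; auto; apply cont_from_const.
Qed.

Lemma controlled_negsum t :
  negsum controlled_family 6 t = sir_negtotal (b t) (d t) (xb t) (xd t) (y t).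
Proof. simpl. unfold sir_negtotal. ring. Qed.

Lemma controlled_rates : quasi_positive_rates 0 controlled_family 6.
Proof.
  destruct Hbd as [_ [_ [_ [_ Hbder]]]]. destruct Hsol as [_ [_ [_ [_ [_ [_ Hder]]]]]].
  intros K. destruct (family_bounded 0 _ 6 K controlled_family_cont) as [M [HM0 HM]].
  destruct (Hpc K) as [l Hl].
  set (Q := (beta + lambda) * (6 * M + 1)).
  exists (20 * Q), l. split; [unfold Q; nra|].
  intros t Ht Hnl i Hi Hneg. rewrite controlled_negsum.
  destruct (Hbder t ltac:(lra)) as [Hdb Hdd].
  destruct (Hder t ltac:(lra) (Hl t Ht Hnl)) as [Hdxb [Hdxd Hdy]]. cbv zeta in Hdxb, Hdxd, Hdy.
  pose proof (HM 0%nat t ltac:(lia) ltac:(lra)). pose proof (HM 1%nat t ltac:(lia) ltac:(lra)).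
  pose proof (HM 2%nat t ltac:(lia) ltac:(lra)). pose proof (HM 3%nat t ltac:(lia) ltac:(lra)).
  pose proof (HM 4%nat t ltac:(lia) ltac:(lra)). pose proof (HM 5%nat t ltac:(lia) ltac:(lra)).
  pose proof (Hsig t ltac:(lra)). simpl in *.
  assert (HQ : (beta + lambda) * (6 * M + 1) <= Q) by (unfold Q; lra).
  destruct i as [|[|[|[|[|[|i]]]]]]; simpl in Hneg; try lia; eexists; split.
  - exact Hdxb.
  - eapply rate_xb; eauto.
  - exact Hdxd.
  - eapply rate_xd; eauto.
  - exact Hdy.
  - eapply rate_y; eauto.
  - apply derivable_pt_lim_minus; eauto.
  - eapply rate_b_xb; eauto.
  - apply derivable_pt_lim_minus; eauto.
  - eapply rate_d_xd; eauto.
  - apply derivable_pt_lim_minus; eauto.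
    apply derivable_pt_lim_minus; eauto. apply derivable_pt_lim_minus; eauto.
    apply derivable_pt_lim_const.
  - eapply rate_s_y; eauto.
Qed.

Lemma controlled_invariant i t : (i < 6)%nat -> 0 <= t -> 0 <= controlled_family i t.
Proof.
  destruct Hbd as [Hb0 [Hdd0 _]]. destruct Hsol as [Hxb0 [Hxd0 [Hy0 _]]].
  intros Hi Ht. apply (quasi_positivity 0 controlled_family 6); auto.
  - exact controlled_family_cont.
  - exact controlled_rates.
  - intros [|[|[|[|[|[|j]]]]]] Hj; simpl; try lia; rewrite ?Hb0, ?Hdd0, ?Hxb0, ?Hxd0, ?Hy0; lra.
Qed.

End Controlled.

Definition cmp_negtotal (XB1 XD1 Y1 XB2 XD2 Y2 : R) : R :=
  negpart (XB2 - XB1) + negpart (XD2 - XD1) + negpart (Y2 - Y1).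

Section ComparisonRates.
Variables (lambda beta Gamma B D XB1 XD1 Y1 S1 XB2 XD2 Y2 S2 M Q : R).
Hypotheses (Hlam : 0 < lambda) (Hbeta : 0 < beta) (HG : 0 < Gamma <= 1)
  (HS1 : 0 <= S1 <= 1) (HS12 : S1 <= S2)
  (A0 : Rabs XB1 <= M) (A1 : Rabs XD1 <= M) (A2 : Rabs Y1 <= M)
  (A4 : Rabs (D - XD1) <= M) (A5 : Rabs (1 - B - D - Y1) <= M)
  (B3 : Rabs (B - XB2) <= M) (B4 : Rabs (D - XD2) <= M) (B5 : Rabs (1 - B - D - Y2) <= M)
  (P0 : 0 <= XB2) (P1 : 0 <= XD2) (P2 : 0 <= Y2)
  (P3 : 0 <= B - XB2) (P4 : 0 <= D - XD2) (P5 : 0 <= 1 - B - D - Y2)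
  (HQ : (beta + lambda) * (10 * M + 1) <= Q).

Lemma cmp_constants : 0 <= M /\ 0 <= Q /\ 10 * (lambda * M) + beta <= Q /\
  0 <= Q * negpart (XB2 - XB1) /\ 0 <= Q * negpart (XD2 - XD1) /\ 0 <= Q * negpart (Y2 - Y1).
Proof.
  assert (0 <= M) by (pose proof (Rabs_pos XB1); lra). assert (0 <= Q) by nra.
  repeat split; try nra; apply Rmult_le_pos; auto; apply negpart_ge0.
Qed.

Lemma rate_cmp_xb : XB2 - XB1 < 0 ->
  - (20 * Q) * cmp_negtotal XB1 XD1 Y1 XB2 XD2 Y2 <=
  beta * XD2 + lambda * (B - XB2) * (XB2 + XD2 + Y2)
  - (beta * XD1 + lambda * (B - XB1) * (XB1 + XD1 + Y1)).
Proof.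
  intros Hneg. destruct cmp_constants as [HM0 [HQ0 [HlQ [Q0 [Q1 Q2]]]]]. unfold cmp_negtotal.
  replace (beta * XD2 + lambda * (B - XB2) * (XB2 + XD2 + Y2)
           - (beta * XD1 + lambda * (B - XB1) * (XB1 + XD1 + Y1)))
    with ((beta + lambda * (B - XB2)) * (XD2 - XD1) + (lambda * (B - XB2)) * (Y2 - Y1)
          + (lambda * (B - XB2) - lambda * (XB1 + XD1 + Y1)) * (XB2 - XB1)) by ring.
  apply Rabs_le_between in A0, A1, A2, B3.
  pose proof (bound_mul lambda lambda (B - XB2) M ltac:(lra) ltac:(lra)).
  pose proof (bound_mul lambda lambda (XB1 + XD1 + Y1) (3 * M) ltac:(lra) ltac:(lra)).
  assert (0 <= lambda * (B - XB2)) by (apply Rmult_le_pos; lra).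
  pose proof (rate_cross (beta + lambda * (B - XB2)) (XD2 - XD1) Q ltac:(split; lra)).
  pose proof (rate_cross (lambda * (B - XB2)) (Y2 - Y1) Q ltac:(split; lra)).
  pose proof (rate_own (lambda * (B - XB2) - lambda * (XB1 + XD1 + Y1)) (XB2 - XB1) Q Hneg
                ltac:(split; lra)).
  lra.
Qed.

Lemma rate_cmp_xd : XD2 - XD1 < 0 ->
  - (20 * Q) * cmp_negtotal XB1 XD1 Y1 XB2 XD2 Y2 <=
  Gamma * lambda * (D - XD2) * Y2 + Gamma * lambda * XD2 * (1 - B - D)
  + lambda * (D - XD2) * (XB2 + XD2 + Y2) - beta * XD2
  - (Gamma * lambda * (D - XD1) * Y1 + Gamma * lambda * XD1 * (1 - B - D)
     + lambda * (D - XD1) * (XB1 + XD1 + Y1) - beta * XD1).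
Proof.
  intros Hneg. destruct cmp_constants as [HM0 [HQ0 [HlQ [Q0 [Q1 Q2]]]]]. unfold cmp_negtotal.
  replace (Gamma * lambda * (D - XD2) * Y2 + Gamma * lambda * XD2 * (1 - B - D)
      + lambda * (D - XD2) * (XB2 + XD2 + Y2) - beta * XD2
      - (Gamma * lambda * (D - XD1) * Y1 + Gamma * lambda * XD1 * (1 - B - D)
         + lambda * (D - XD1) * (XB1 + XD1 + Y1) - beta * XD1))
    with ((Gamma * lambda * (D - XD2)) * (Y2 - Y1) + (lambda * (D - XD2)) * (XB2 - XB1)
          + (lambda * (D - XD2)) * (Y2 - Y1)
          + (Gamma * lambda * (1 - B - D) - Gamma * lambda * Y1 + lambda * (D - XD2)
             - lambda * (XB1 + XD1 + Y1) - beta) * (XD2 - XD1)) by ring.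
  assert (HGl : 0 <= Gamma * lambda <= lambda) by (split; nra).
  apply Rabs_le_between in A0, A1, A2, A5, B4.
  pose proof (bound_mul lambda lambda (D - XD2) M ltac:(lra) ltac:(lra)).
  pose proof (bound_mul (Gamma * lambda) lambda (D - XD2) M HGl ltac:(lra)).
  pose proof (bound_mul lambda lambda (XB1 + XD1 + Y1) (3 * M) ltac:(lra) ltac:(lra)).
  pose proof (bound_mul (Gamma * lambda) lambda (1 - B - D) (2 * M) HGl ltac:(lra)).
  pose proof (bound_mul (Gamma * lambda) lambda Y1 M HGl ltac:(lra)).
  assert (0 <= Gamma * lambda * (D - XD2)) by (apply Rmult_le_pos; lra).
  assert (0 <= lambda * (D - XD2)) by (apply Rmult_le_pos; lra).
  pose proof (rate_cross (Gamma * lambda * (D - XD2)) (Y2 - Y1) Q ltac:(split; lra)).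
  pose proof (rate_cross (lambda * (D - XD2)) (XB2 - XB1) Q ltac:(split; lra)).
  pose proof (rate_cross (lambda * (D - XD2)) (Y2 - Y1) Q ltac:(split; lra)).
  pose proof (rate_own (Gamma * lambda * (1 - B - D) - Gamma * lambda * Y1 + lambda * (D - XD2)
                        - lambda * (XB1 + XD1 + Y1) - beta) (XD2 - XD1) Q Hneg ltac:(split; lra)).
  lra.
Qed.

(* Here the monotone dependence on the control enters: the extra term
   lambda (S2 - S1) (s - y2) (xb2 + y2 + (1 - Gamma) xd2) is nonnegative. *)
Lemma rate_cmp_y : Y2 - Y1 < 0 ->
  - (20 * Q) * cmp_negtotal XB1 XD1 Y1 XB2 XD2 Y2 <=
  - Gamma * lambda * D * Y2 + lambda * S2 * (1 - B - D - Y2) * (XB2 + Y2 + (1 - Gamma) * XD2)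
  - (- Gamma * lambda * D * Y1 + lambda * S1 * (1 - B - D - Y1) * (XB1 + Y1 + (1 - Gamma) * XD1)).
Proof.
  intros Hneg. destruct cmp_constants as [HM0 [HQ0 [HlQ [Q0 [Q1 Q2]]]]]. unfold cmp_negtotal.
  replace (- Gamma * lambda * D * Y2 + lambda * S2 * (1 - B - D - Y2) * (XB2 + Y2 + (1 - Gamma) * XD2)
    - (- Gamma * lambda * D * Y1 + lambda * S1 * (1 - B - D - Y1) * (XB1 + Y1 + (1 - Gamma) * XD1)))
    with (lambda * (S2 - S1) * ((1 - B - D - Y2) * (XB2 + Y2 + (1 - Gamma) * XD2))
          + (lambda * S1 * (1 - B - D - Y2)) * (XB2 - XB1)
          + (lambda * S1 * (1 - B - D - Y2) * (1 - Gamma)) * (XD2 - XD1)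
          + (- Gamma * lambda * D + lambda * S1 * (1 - B - D - Y2)
             - lambda * S1 * (XB1 + Y1 + (1 - Gamma) * XD1)) * (Y2 - Y1)) by ring.
  assert (HGl : 0 <= Gamma * lambda <= lambda) by (split; nra).
  assert (HlS : 0 <= lambda * S1 <= lambda) by (split; nra).
  apply Rabs_le_between in A0, A1, A2, A4, B5.
  assert (Hextra : 0 <= lambda * (S2 - S1) * ((1 - B - D - Y2) * (XB2 + Y2 + (1 - Gamma) * XD2))).
  { assert (0 <= (1 - Gamma) * XD2) by (apply Rmult_le_pos; lra).
    apply Rmult_le_pos; apply Rmult_le_pos; lra. }
  pose proof (bound_mul (lambda * S1) lambda (1 - B - D - Y2) M HlS ltac:(lra)).
  assert (0 <= lambda * S1 * (1 - B - D - Y2)) by (apply Rmult_le_pos; lra).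
  assert (0 <= lambda * S1 * (1 - B - D - Y2) * (1 - Gamma)) by (apply Rmult_le_pos; lra).
  assert (lambda * S1 * (1 - B - D - Y2) * (1 - Gamma) <= lambda * S1 * (1 - B - D - Y2)) by nra.
  pose proof (bound_mul (1 - Gamma) 1 XD1 M ltac:(lra) ltac:(lra)).
  pose proof (bound_mul (lambda * S1) lambda (XB1 + Y1 + (1 - Gamma) * XD1) (3 * M) HlS ltac:(lra)).
  pose proof (bound_mul (Gamma * lambda) lambda D (2 * M) HGl ltac:(lra)).
  pose proof (rate_cross (lambda * S1 * (1 - B - D - Y2)) (XB2 - XB1) Q ltac:(split; lra)).
  pose proof (rate_cross (lambda * S1 * (1 - B - D - Y2) * (1 - Gamma)) (XD2 - XD1) Q
                ltac:(split; lra)).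
  pose proof (rate_own (- Gamma * lambda * D + lambda * S1 * (1 - B - D - Y2)
                        - lambda * S1 * (XB1 + Y1 + (1 - Gamma) * XD1)) (Y2 - Y1) Q Hneg
                ltac:(split; lra)).
  lra.
Qed.

End ComparisonRates.

Section Comparison.
Variables (lambda beta Gamma d0 xd0 : R) (b d s1 s2 xb1 xd1 y1 xb2 xd2 y2 : R -> R).
Hypotheses (Hlam : 0 < lambda) (Hbeta : 0 < beta) (HG : 0 < Gamma <= 1)
  (Hx0 : 0 < xd0 <= d0) (Hd0 : d0 < 1) (Hbd : SolBD lambda beta Gamma d0 b d)
  (Hs1 : forall t, 0 <= t -> 0 <= s1 t <= 1) (Hpc1 : piecewise_continuous s1)
  (Hsol1 : SolX lambda beta Gamma xd0 b d s1 xb1 xd1 y1)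
  (Hs2 : forall t, 0 <= t -> 0 <= s2 t <= 1) (Hpc2 : piecewise_continuous s2)
  (Hsol2 : SolX lambda beta Gamma xd0 b d s2 xb2 xd2 y2)
  (Hle : forall t, 0 < t -> continuity_pt s1 t -> continuity_pt s2 t -> s1 t <= s2 t).

Definition difference_family (j : nat) : R -> R :=
  match j with
  | O => fun t => xb2 t - xb1 t | 1 => fun t => xd2 t - xd1 t | _ => fun t => y2 t - y1 t
  end.

Lemma difference_family_cont i : (i < 3)%nat -> cont_from 0 (difference_family i).
Proof.
  destruct Hsol1 as [_ [_ [_ [Hcxb [Hcxd [Hcy _]]]]]].
  destruct Hsol2 as [_ [_ [_ [Hcxb' [Hcxd' [Hcy' _]]]]]].
  destruct i as [|[|[|i]]]; simpl; intros Hi; try lia; apply cont_from_minus; auto.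
Qed.

Lemma difference_rates : quasi_positive_rates 0 difference_family 3.
Proof.
  pose proof (controlled_invariant lambda beta Gamma d0 xd0 b d s2 xb2 xd2 y2
                Hlam Hbeta HG Hx0 Hd0 Hbd Hs2 Hpc2 Hsol2) as Inv2.
  destruct Hbd as [_ [_ [_ [_ Hbder]]]].
  destruct Hsol1 as [_ [_ [_ [_ [_ [_ Hder1]]]]]].
  destruct Hsol2 as [_ [_ [_ [_ [_ [_ Hder2]]]]]].
  intros K.
  destruct (family_bounded 0 _ 6 K (controlled_family_cont lambda beta Gamma d0 xd0 b d s1 xb1 xd1 y1
              Hbd Hsol1)) as [M1 [HM10 HM1]].
  destruct (family_bounded 0 _ 6 K (controlled_family_cont lambda beta Gamma d0 xd0 b d s2 xb2 xd2 y2
              Hbd Hsol2)) as [M2 [HM20 HM2]].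
  destruct (Hpc1 K) as [l1 Hl1]. destruct (Hpc2 K) as [l2 Hl2].
  set (M := M1 + M2). set (Q := (beta + lambda) * (10 * M + 1)).
  exists (20 * Q), (l1 ++ l2). split; [unfold Q, M; nra|].
  intros t Ht Hnl i Hi Hneg.
  assert (Hc1 : continuity_pt s1 t) by (apply Hl1; auto; intro; apply Hnl, in_or_app; auto).
  assert (Hc2 : continuity_pt s2 t) by (apply Hl2; auto; intro; apply Hnl, in_or_app; auto).
  destruct (Hder1 t ltac:(lra) Hc1) as [Hdxb1 [Hdxd1 Hdy1]]. cbv zeta in Hdxb1, Hdxd1, Hdy1.
  destruct (Hder2 t ltac:(lra) Hc2) as [Hdxb2 [Hdxd2 Hdy2]]. cbv zeta in Hdxb2, Hdxd2, Hdy2.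
  assert (Bnd1 : forall j, (j < 6)%nat -> Rabs (controlled_family b d xb1 xd1 y1 j t) <= M).
  { intros j Hj. pose proof (HM1 j t Hj ltac:(lra)). unfold M; lra. }
  assert (Bnd2 : forall j, (j < 6)%nat -> Rabs (controlled_family b d xb2 xd2 y2 j t) <= M).
  { intros j Hj. pose proof (HM2 j t Hj ltac:(lra)). unfold M; lra. }
  pose proof (Bnd1 0%nat ltac:(lia)). pose proof (Bnd1 1%nat ltac:(lia)).
  pose proof (Bnd1 2%nat ltac:(lia)). pose proof (Bnd1 4%nat ltac:(lia)).
  pose proof (Bnd1 5%nat ltac:(lia)). pose proof (Bnd2 3%nat ltac:(lia)).
  pose proof (Bnd2 4%nat ltac:(lia)). pose proof (Bnd2 5%nat ltac:(lia)).
  pose proof (Inv2 0%nat t ltac:(lia) ltac:(lra)). pose proof (Inv2 1%nat t ltac:(lia) ltac:(lra)).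
  pose proof (Inv2 2%nat t ltac:(lia) ltac:(lra)). pose proof (Inv2 3%nat t ltac:(lia) ltac:(lra)).
  pose proof (Inv2 4%nat t ltac:(lia) ltac:(lra)). pose proof (Inv2 5%nat t ltac:(lia) ltac:(lra)).
  pose proof (Hs1 t ltac:(lra)). pose proof (Hle t ltac:(lra) Hc1 Hc2).
  assert (HQ : (beta + lambda) * (10 * M + 1) <= Q) by (unfold Q; lra).
  replace (negsum difference_family 3 t)
    with (cmp_negtotal (xb1 t) (xd1 t) (y1 t) (xb2 t) (xd2 t) (y2 t))
    by (simpl; unfold cmp_negtotal; ring).
  simpl in *.
  destruct i as [|[|[|i]]]; simpl in Hneg; try lia;
    (eexists; split; [apply derivable_pt_lim_minus; eauto|]).
  - eapply rate_cmp_xb; eauto.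
  - eapply rate_cmp_xd; eauto.
  - eapply rate_cmp_y; eauto.
Qed.

Lemma comparison i t : (i < 3)%nat -> 0 <= t -> 0 <= difference_family i t.
Proof.
  destruct Hsol1 as [Hxb0 [Hxd0 [Hy0 _]]]. destruct Hsol2 as [Hxb0' [Hxd0' [Hy0' _]]].
  intros Hi Ht. apply (quasi_positivity 0 difference_family 3); auto.
  - exact difference_family_cont.
  - exact difference_rates.
  - intros [|[|[|j]]] Hj; simpl; try lia; rewrite ?Hxb0, ?Hxd0, ?Hy0, ?Hxb0', ?Hxd0', ?Hy0'; lra.
Qed.

End Comparison.

Lemma le_of_geometric_slack x y c : 0 <= c -> (forall n, x <= y + c * (1/2)^n) -> x <= y.
Proof.
  intros Hc H. apply Rnot_lt_le. intro Hlt.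
  destruct (pow_lt_1_zero (1/2) ltac:(rewrite Rabs_right; lra) ((x - y) / (c + 1)))
    as [N HN]; [apply Rdiv_lt_0_compat; lra|].
  specialize (HN N (le_n N)). specialize (H N).
  assert (0 <= (1/2)^N) by (apply pow_le; lra).
  rewrite Rabs_right in HN by lra.
  assert (c * (1/2)^N <= c * ((x - y) / (c + 1))) by (apply Rmult_le_compat_l; lra).
  assert (c * ((x - y) / (c + 1)) < x - y).
  { apply Rmult_lt_reg_r with (c + 1); [lra|]. field_simplify; nra. }
  lra.
Qed.

Lemma eq_of_geometric_slack x y c : 0 <= c -> (forall n, Rabs (x - y) <= c * (1/2)^n) -> x = y.
Proof.
  intros Hc H. assert (Rabs (x - y) <= 0).
  { apply (le_of_geometric_slack _ _ c Hc). intros n. specialize (H n). lra. }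
  pose proof (Rabs_pos (x - y)). assert (Rabs (x - y) = 0) by lra.
  apply Rabs_eq_0 in H2. lra.
Qed.

Lemma geometric_eventually_small c eps : 0 <= c -> 0 < eps ->
  exists N, forall n, (N <= n)%nat -> c * (1/2)^n < eps.
Proof.
  intros Hc He. destruct (pow_lt_1_zero (1/2) ltac:(rewrite Rabs_right; lra) (eps / (c + 1)))
    as [N HN]; [apply Rdiv_lt_0_compat; lra|].
  exists N. intros n Hn. specialize (HN n Hn). assert (0 <= (1/2)^n) by (apply pow_le; lra).
  rewrite Rabs_right in HN by lra.
  assert (c * (1/2)^n <= c * (eps / (c + 1))) by (apply Rmult_le_compat_l; lra).
  assert (c * (eps / (c + 1)) < eps).
  { apply Rmult_lt_reg_r with (c + 1); [lra|]. field_simplify; nra. }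
  lra.
Qed.

Lemma geometric_cauchy_limit (u : nat -> R) C : 0 <= C ->
  (forall n m, (n <= m)%nat -> Rabs (u m - u n) <= C * (1/2)^n) ->
  forall n, Rabs (real (Lim_seq u) - u n) <= C * (1/2)^n.
Proof.
  intros HC H.
  assert (Hex : ex_finite_lim_seq u).
  { apply ex_lim_seq_cauchy_corr. intros eps.
    destruct (geometric_eventually_small C eps HC (cond_pos eps)) as [N HN].
    exists N. intros n m Hn Hm. destruct (Nat.le_ge_cases n m).
    - rewrite <- Rabs_Ropp. replace (- (u n - u m)) with (u m - u n) by ring.
      eapply Rle_lt_trans; [apply H; auto|apply HN; auto].
    - eapply Rle_lt_trans; [apply H; auto|apply HN; auto]. }
  destruct Hex as [l Hl]. rewrite (is_lim_seq_unique u l Hl). simpl.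
  intros n. apply Rnot_lt_le. intro Hlt. apply is_lim_seq_spec in Hl.
  destruct (Hl (mkposreal _ (proj2 (Rlt_0_minus _ _) Hlt))) as [N HN]. simpl in HN.
  specialize (HN (max N n) (Nat.le_max_l _ _)). specialize (H n (max N n) (Nat.le_max_r _ _)).
  pose proof (Rabs_triang (l - u (max N n)) (u (max N n) - u n)) as Htr.
  replace (l - u (max N n) + (u (max N n) - u n)) with (l - u n) in Htr by ring.
  rewrite <- Rabs_Ropp in HN. replace (- (u (max N n) - l)) with (l - u (max N n)) in HN by ring.
  lra.
Qed.

Definition integral (f : R -> R) (a b : R) : R := RInt f a b.

Lemma integral_point f a : integral f a a = 0.
Proof. unfold integral. rewrite RInt_point. reflexivity. Qed.

Lemma continuous_of_pt (f : R -> R) s : continuity_pt f s -> continuous f s.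
Proof. intros H. apply continuity_pt_filterlim; auto. Qed.

Lemma integral_exists (f : R -> R) tau a c : (forall s, 0 < s -> continuous f s) ->
  0 < tau -> tau <= a -> tau <= c -> ex_RInt f a c.
Proof.
  intros Hc Ht Ha Hcc. apply (@ex_RInt_continuous R_CompleteNormedModule). intros z Hz. apply Hc.
  assert (Rmin a c >= tau) by (unfold Rmin; destruct Rle_dec; lra). lra.
Qed.

Lemma integral_lipschitz (f : R -> R) K tau a c : 0 < tau -> (forall s, 0 < s -> continuous f s) ->
  (forall s, 0 <= s -> Rabs (f s) <= K) -> tau <= a -> tau <= c ->
  Rabs (integral f tau a - integral f tau c) <= K * Rabs (a - c).
Proof.
  intros Ht Hc Hb Ha Hcc.
  assert (Hex : forall x y, tau <= x -> tau <= y -> ex_RInt f x y)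
    by (intros; eapply integral_exists; eauto).
  assert (E : integral f tau c + integral f c a = integral f tau a)
    by (apply (RInt_Chasles f tau c a); apply Hex; lra).
  rewrite <- E. replace (integral f tau c + integral f c a - integral f tau c) with (integral f c a)
    by ring. unfold integral.
  destruct (Rle_dec c a).
  - rewrite (Rabs_right (a - c)), Rmult_comm by lra.
    apply abs_RInt_le_const; [exact r|apply Hex; lra|intros; apply Hb; lra].
  - rewrite <- opp_RInt_swap by (apply Hex; lra).
    change (Rabs (- RInt f a c) <= K * Rabs (a - c)). rewrite Rabs_Ropp.
    rewrite (Rabs_left (a - c)) by lra. replace (- (a - c)) with (c - a) by ring.
    rewrite Rmult_comm. apply abs_RInt_le_const; [lra|apply Hex; lra|intros; apply Hb; lra].
Qed.

Lemma integral_exp C k tau t : 0 < k ->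
  integral (fun s => C * exp (k * (s - tau))) tau t = C * (exp (k * (t - tau)) - 1) / k.
Proof.
  intros Hk. unfold integral. apply is_RInt_unique.
  assert (E : minus ((fun s => C * exp (k * (s - tau)) / k) t) ((fun s => C * exp (k * (s - tau)) / k) tau)
     = C * (exp (k * (t - tau)) - 1) / k).
  { unfold minus, plus, opp; simpl. replace (tau - tau) with 0 by ring.
    rewrite Rmult_0_r, exp_0. field. lra. }
  rewrite <- E. apply (@is_RInt_derive R_CompleteNormedModule (fun s => C * exp (k * (s - tau)) / k)).
  - intros x _. auto_derive; auto. replace (x + - tau) with (x - tau) by ring. field. lra.
  - intros x _. apply continuous_of_pt. reg.
Qed.

Lemma integral_derivative (J : R -> R) tau t : 0 < tau -> tau < t ->
  (forall s, 0 < s -> continuous J s) -> derivable_pt_lim (fun x => integral J tau x) t (J t).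
Proof.
  intros Htau Ht HJ. apply is_derive_Reals. unfold integral.
  apply (@is_derive_RInt R_NormedModule J (fun x => RInt J tau x) tau t).
  - exists (mkposreal (t - tau) ltac:(lra)). intros x Hx.
    unfold ball in Hx; simpl in Hx; unfold AbsRing_ball, abs, minus, plus, opp in Hx; simpl in Hx.
    apply Rabs_def2 in Hx.
    apply (@RInt_correct R_CompleteNormedModule). eapply integral_exists; eauto; lra.
  - apply HJ. lra.
Qed.

(* Global existence for a planar non-autonomous o.d.e.  u' = G1 t u v,
   v' = G2 t u v on [tau, +oo) whose right-hand side is bounded and globally
   Lipschitz, by Picard iteration: the iterates are K-Lipschitz in time and
   their successive gaps are bounded by 2^-n exp (4 K (t - tau)), so they
   converge locally uniformly to a solution of the integral equation. *)
Section PicardIteration.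
Variables (tau u0 v0 K : R) (G1 G2 : R -> R -> R -> R).
Hypotheses (Htau : 0 < tau) (HK : 0 < K)
  (Hbound : forall s u v, 0 <= s -> Rabs (G1 s u v) <= K /\ Rabs (G2 s u v) <= K)
  (Hlip : forall s u v u' v', 0 <= s ->
     Rabs (G1 s u v - G1 s u' v') <= K * (Rabs (u - u') + Rabs (v - v')) /\
     Rabs (G2 s u v - G2 s u' v') <= K * (Rabs (u - u') + Rabs (v - v')))
  (Hcont : forall P Q s, 0 < s -> continuity_pt P s -> continuity_pt Q s ->
     continuity_pt (fun x => G1 x (P x) (Q x)) s /\ continuity_pt (fun x => G2 x (P x) (Q x)) s).

Definition rhs1 (P Q : R -> R) (s : R) : R := G1 s (clip_left tau P s) (clip_left tau Q s).
Definition rhs2 (P Q : R -> R) (s : R) : R := G2 s (clip_left tau P s) (clip_left tau Q s).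

Lemma rhs_continuous P Q : cont_from tau P -> cont_from tau Q -> forall s, 0 < s ->
  continuous (rhs1 P Q) s /\ continuous (rhs2 P Q) s.
Proof.
  intros HP HQ s Hs.
  destruct (Hcont (clip_left tau P) (clip_left tau Q) s Hs) as [A B];
    try apply clip_left_continuous; auto.
  split; apply continuous_of_pt; auto.
Qed.

Lemma rhs_bounded P Q s : 0 <= s -> Rabs (rhs1 P Q s) <= K /\ Rabs (rhs2 P Q s) <= K.
Proof. intros; apply Hbound; auto. Qed.

Fixpoint picard (n : nat) : (R -> R) * (R -> R) :=
  match n with
  | O => (fun _ => u0, fun _ => v0)
  | S n => (fun t => u0 + integral (rhs1 (fst (picard n)) (snd (picard n))) tau t,
            fun t => v0 + integral (rhs2 (fst (picard n)) (snd (picard n))) tau t)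
  end.

Lemma picard_succ1 n t :
  fst (picard (S n)) t = u0 + integral (rhs1 (fst (picard n)) (snd (picard n))) tau t.
Proof. reflexivity. Qed.

Lemma picard_succ2 n t :
  snd (picard (S n)) t = v0 + integral (rhs2 (fst (picard n)) (snd (picard n))) tau t.
Proof. reflexivity. Qed.

Lemma shift_diff c A B : c + A - (c + B) = A - B.
Proof. ring. Qed.

Lemma diff_chain x y z : x - y + (y - z) = x - z.
Proof. ring. Qed.

Lemma diff_chain' x c A B : x - (c + A) + (A - B) = x - (c + B).
Proof. ring. Qed.

Lemma picard_lipschitz n : forall t t', tau <= t -> tau <= t' ->
  Rabs (fst (picard n) t - fst (picard n) t') <= K * Rabs (t - t') /\
  Rabs (snd (picard n) t - snd (picard n) t') <= K * Rabs (t - t').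
Proof.
  induction n; intros t t' Ht Ht'.
  - simpl. rewrite !Rminus_diag, !Rabs_R0. pose proof (Rabs_pos (t - t')). split; nra.
  - assert (HP : cont_from tau (fst (picard n)))
      by (apply (lipschitz_cont_from tau _ K); try lra; intros; apply IHn; auto).
    assert (HQ : cont_from tau (snd (picard n)))
      by (apply (lipschitz_cont_from tau _ K); try lra; intros; apply IHn; auto).
    rewrite !picard_succ1, !picard_succ2, !shift_diff.
    split; apply integral_lipschitz; auto; intros s Hs;
      first [apply (rhs_continuous _ _ HP HQ s Hs) | apply (rhs_bounded _ _ s Hs)].
Qed.

Lemma picard_cont n : cont_from tau (fst (picard n)) /\ cont_from tau (snd (picard n)).
Proof. split; apply (lipschitz_cont_from tau _ K); try lra; intros; apply picard_lipschitz; auto. Qed.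

Lemma integral_gap P Q P' Q' c k t : cont_from tau P -> cont_from tau Q ->
  cont_from tau P' -> cont_from tau Q' -> 0 <= c -> 0 < k -> tau <= t ->
  (forall s, tau <= s <= t -> Rabs (P s - P' s) + Rabs (Q s - Q' s) <= c * exp (k * (s - tau))) ->
  Rabs (integral (rhs1 P Q) tau t - integral (rhs1 P' Q') tau t) <= K * c * (exp (k * (t - tau)) - 1) / k /\
  Rabs (integral (rhs2 P Q) tau t - integral (rhs2 P' Q') tau t) <= K * c * (exp (k * (t - tau)) - 1) / k.
Proof.
  intros HP HQ HP' HQ' Hc Hk Ht Hb.
  assert (Gen : forall (f g : R -> R), (forall s, 0 < s -> continuous f s) ->
     (forall s, 0 < s -> continuous g s) ->
     (forall s, tau <= s <= t -> Rabs (f s - g s) <= K * c * exp (k * (s - tau))) ->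
     Rabs (integral f tau t - integral g tau t) <= K * c * (exp (k * (t - tau)) - 1) / k).
  { intros f g Hf Hg Hfg.
    assert (Hh : forall s, 0 < s -> continuous (fun s => f s - g s) s).
    { intros s Hs. apply continuous_of_pt.
      apply continuity_pt_minus; apply (proj2 (continuity_pt_filterlim _ s)); [apply Hf|apply Hg]; auto. }
    assert (E : integral f tau t - integral g tau t = integral (fun s => f s - g s) tau t).
    { unfold integral. symmetry. apply (RInt_minus f g); apply (integral_exists _ tau); auto; lra. }
    rewrite E, <- integral_exp by auto. unfold integral.
    eapply Rle_trans; [apply abs_RInt_le; [lra|apply (integral_exists _ tau); auto; lra]|].
    apply RInt_le; [lra| | |intros s Hs; apply Hfg; lra].
    - apply (integral_exists _ tau); auto; try lra. intros s Hs. apply continuous_of_pt.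
      apply (continuity_pt_comp (fun s => f s - g s) Rabs); [|apply Rcontinuity_abs].
      apply (proj2 (continuity_pt_filterlim _ s)). apply Hh; lra.
    - apply (@ex_RInt_continuous R_CompleteNormedModule). intros. apply continuous_of_pt. reg. }
  assert (Pointwise : forall s, tau <= s <= t -> forall u v u' v',
      Rabs (u - u') + Rabs (v - v') <= c * exp (k * (s - tau)) ->
      forall G : R -> R -> R -> R,
      (Rabs (G s u v - G s u' v') <= K * (Rabs (u - u') + Rabs (v - v'))) ->
      Rabs (G s u v - G s u' v') <= K * c * exp (k * (s - tau))).
  { intros s Hs u v u' v' Hd G HG. eapply Rle_trans; [exact HG|].
    rewrite Rmult_assoc. apply Rmult_le_compat_l; lra. }
  split; apply Gen;
    try (intros s Hs; first [apply (rhs_continuous P Q HP HQ s Hs) | apply (rhs_continuous P' Q' HP' HQ' s Hs)]);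
    intros s Hs; unfold rhs1, rhs2; rewrite !clip_left_eq by lra;
    apply Pointwise; auto; apply Hlip; lra.
Qed.

Definition picard_gap n t :=
  Rabs (fst (picard (S n)) t - fst (picard n) t) + Rabs (snd (picard (S n)) t - snd (picard n) t).

Lemma picard_gap_bound n : forall t, tau <= t -> picard_gap n t <= (1/2)^n * exp (4 * K * (t - tau)).
Proof.
  induction n; intros t Ht.
  - unfold picard_gap. simpl.
    assert (Hc0 : cont_from tau (fun _ : R => u0)) by apply cont_from_const.
    assert (Hc1 : cont_from tau (fun _ : R => v0)) by apply cont_from_const.
    destruct (picard_lipschitz 1 t tau Ht (Rle_refl _)) as [A1 A2]. simpl in A1, A2.
    rewrite integral_point, Rplus_0_r in A1, A2.
    rewrite (Rabs_right (t - tau)) in A1, A2 by lra.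
    pose proof (exp_ineq1_le (4 * K * (t - tau))). nra.
  - destruct (picard_cont n) as [Hp1 Hp2]. destruct (picard_cont (S n)) as [Hq1 Hq2].
    destruct (integral_gap (fst (picard (S n))) (snd (picard (S n))) (fst (picard n)) (snd (picard n))
      ((1/2)^n) (4 * K) t Hq1 Hq2 Hp1 Hp2 ltac:(apply pow_le; lra) ltac:(lra) Ht) as [B1 B2].
    { intros s Hs. apply IHn. lra. }
    unfold picard_gap. rewrite !picard_succ1, !picard_succ2, !shift_diff.
    replace (K * (1/2)^n * (exp (4 * K * (t - tau)) - 1) / (4 * K))
      with ((1/2)^n * (exp (4 * K * (t - tau)) - 1) / 4) in B1, B2 by (field; lra).
    assert (0 <= (1/2)^n) by (apply pow_le; lra).
    simpl pow. set (p := (1/2)^n) in *. set (e := exp (4 * K * (t - tau))) in *. lra.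
Qed.

Lemma picard_cauchy_aux t : tau <= t -> forall j n,
  Rabs (fst (picard (n + j)) t - fst (picard n) t) <= 2 * exp (4 * K * (t - tau)) * ((1/2)^n - (1/2)^(n + j)) /\
  Rabs (snd (picard (n + j)) t - snd (picard n) t) <= 2 * exp (4 * K * (t - tau)) * ((1/2)^n - (1/2)^(n + j)).
Proof.
  intros Ht. induction j; intros n.
  - rewrite Nat.add_0_r, !Rminus_diag, Rabs_R0. split; lra.
  - destruct (IHj n) as [A B]. pose proof (picard_gap_bound (n + j) t Ht) as D. unfold picard_gap in D.
    replace (n + S j)%nat with (S (n + j)) by lia. simpl pow.
    pose proof (Rabs_triang (fst (picard (S (n + j))) t - fst (picard (n + j)) t)
                            (fst (picard (n + j)) t - fst (picard n) t)).
    pose proof (Rabs_triang (snd (picard (S (n + j))) t - snd (picard (n + j)) t)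
                            (snd (picard (n + j)) t - snd (picard n) t)).
    pose proof (Rabs_pos (fst (picard (S (n + j))) t - fst (picard (n + j)) t)).
    pose proof (Rabs_pos (snd (picard (S (n + j))) t - snd (picard (n + j)) t)).
    rewrite !diff_chain in *.
    set (p := (1/2)^(n+j)) in *. set (e := exp (4 * K * (t - tau))) in *. split; lra.
Qed.

Lemma picard_cauchy t : tau <= t -> forall n m, (n <= m)%nat ->
  Rabs (fst (picard m) t - fst (picard n) t) <= 2 * exp (4 * K * (t - tau)) * (1/2)^n /\
  Rabs (snd (picard m) t - snd (picard n) t) <= 2 * exp (4 * K * (t - tau)) * (1/2)^n.
Proof.
  intros Ht n m Hnm. replace m with (n + (m - n))%nat by lia.
  destruct (picard_cauchy_aux t Ht (m - n) n) as [A B]. pose proof (exp_pos (4 * K * (t - tau))).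
  assert (0 <= (1/2)^(n + (m - n))) by (apply pow_le; lra). split; nra.
Qed.

Definition solP (t : R) : R := real (Lim_seq (fun n => fst (picard n) t)).
Definition solQ (t : R) : R := real (Lim_seq (fun n => snd (picard n) t)).

Lemma picard_convergence t n : tau <= t ->
  Rabs (solP t - fst (picard n) t) <= 2 * exp (4 * K * (t - tau)) * (1/2)^n /\
  Rabs (solQ t - snd (picard n) t) <= 2 * exp (4 * K * (t - tau)) * (1/2)^n.
Proof.
  intros Ht. pose proof (exp_pos (4 * K * (t - tau))). unfold solP, solQ.
  split; [apply (geometric_cauchy_limit (fun n => fst (picard n) t))
         |apply (geometric_cauchy_limit (fun n => snd (picard n) t))];
    try lra; intros; apply picard_cauchy; auto.
Qed.

Lemma sol_lipschitz t t' : tau <= t -> tau <= t' ->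
  Rabs (solP t - solP t') <= K * Rabs (t - t') /\ Rabs (solQ t - solQ t') <= K * Rabs (t - t').
Proof.
  intros Ht Ht'. pose proof (exp_pos (4 * K * (t - tau))). pose proof (exp_pos (4 * K * (t' - tau))).
  split; apply (le_of_geometric_slack _ _ (2 * exp (4 * K * (t - tau)) + 2 * exp (4 * K * (t' - tau))));
    try lra; intros n;
    destruct (picard_convergence t n Ht) as [A1 A2]; destruct (picard_convergence t' n Ht') as [B1 B2];
    destruct (picard_lipschitz n t t' Ht Ht') as [C1 C2];
    rewrite Rabs_minus_sym in B1, B2.
  - pose proof (Rabs_triang (solP t - fst (picard n) t) (fst (picard n) t - solP t')).
    pose proof (Rabs_triang (fst (picard n) t - fst (picard n) t') (fst (picard n) t' - solP t')).
    rewrite !diff_chain in *. lra.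
  - pose proof (Rabs_triang (solQ t - snd (picard n) t) (snd (picard n) t - solQ t')).
    pose proof (Rabs_triang (snd (picard n) t - snd (picard n) t') (snd (picard n) t' - solQ t')).
    rewrite !diff_chain in *. lra.
Qed.

Lemma sol_cont : cont_from tau solP /\ cont_from tau solQ.
Proof. split; apply (lipschitz_cont_from tau _ K); try lra; intros; apply sol_lipschitz; auto. Qed.

Lemma sol_integral_equation t : tau <= t ->
  solP t = u0 + integral (rhs1 solP solQ) tau t /\ solQ t = v0 + integral (rhs2 solP solQ) tau t.
Proof.
  intros Ht. pose proof (exp_pos (4 * K * (t - tau))) as He. destruct sol_cont as [HPi HQi].
  assert (Hn : forall n,
    Rabs (integral (rhs1 (fst (picard n)) (snd (picard n))) tau t - integral (rhs1 solP solQ) tau t)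
      <= (1/2)^n * (exp (4 * K * (t - tau)) - 1) /\
    Rabs (integral (rhs2 (fst (picard n)) (snd (picard n))) tau t - integral (rhs2 solP solQ) tau t)
      <= (1/2)^n * (exp (4 * K * (t - tau)) - 1)).
  { intros n. destruct (picard_cont n) as [Hp1 Hp2].
    assert (0 <= (1/2)^n) by (apply pow_le; lra).
    destruct (integral_gap (fst (picard n)) (snd (picard n)) solP solQ (4 * (1/2)^n) (4 * K) t
                Hp1 Hp2 HPi HQi) as [A B]; try lra.
    { intros s Hs. destruct (picard_convergence s n ltac:(lra)) as [C D].
      rewrite Rabs_minus_sym in C, D. lra. }
    replace (K * (4 * (1/2)^n) * (exp (4 * K * (t - tau)) - 1) / (4 * K))
      with ((1/2)^n * (exp (4 * K * (t - tau)) - 1)) in A, B by (field; lra).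
    auto. }
  split; apply (eq_of_geometric_slack _ _ (2 * exp (4 * K * (t - tau)))); try lra; intros n;
    destruct (picard_convergence t (S n) Ht) as [A B]; destruct (Hn n) as [C D];
    simpl pow in A, B; assert (0 <= (1/2)^n) by (apply pow_le; lra).
  - rewrite picard_succ1 in A. pose proof (Rabs_triang (solP t - (u0 + integral (rhs1 (fst (picard n)) (snd (picard n))) tau t))
                  (integral (rhs1 (fst (picard n)) (snd (picard n))) tau t - integral (rhs1 solP solQ) tau t)).
    rewrite diff_chain' in *.
    set (p := (1/2)^n) in *. set (e := exp (4 * K * (t - tau))) in *. nra.
  - rewrite picard_succ2 in B. pose proof (Rabs_triang (solQ t - (v0 + integral (rhs2 (fst (picard n)) (snd (picard n))) tau t))
                  (integral (rhs2 (fst (picard n)) (snd (picard n))) tau t - integral (rhs2 solP solQ) tau t)).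
    rewrite diff_chain' in *.
    set (p := (1/2)^n) in *. set (e := exp (4 * K * (t - tau))) in *. nra.
Qed.

Theorem picard_global_existence : exists P Q,
  cont_from tau P /\ cont_from tau Q /\ P tau = u0 /\ Q tau = v0 /\
  forall t, tau < t -> derivable_pt_lim P t (G1 t (P t) (Q t)) /\ derivable_pt_lim Q t (G2 t (P t) (Q t)).
Proof.
  exists solP, solQ.
  destruct sol_cont as [HPi HQi].
  assert (Hloc : forall t (F : R -> R) c J, tau < t ->
      (forall x, tau <= x -> F x = c + integral J tau x) ->
      (forall s, 0 < s -> continuous J s) -> derivable_pt_lim F t (J t)).
  { intros t F c J Ht HF HJ. apply is_derive_Reals.
    apply (is_derive_ext_loc (fun x => c + integral J tau x)).
    - exists (mkposreal (t - tau) ltac:(lra)). intros x Hx.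
      unfold ball in Hx; simpl in Hx; unfold AbsRing_ball, abs, minus, plus, opp in Hx; simpl in Hx.
      apply Rabs_def2 in Hx. symmetry. apply HF. lra.
    - apply is_derive_Reals. replace (J t) with (0 + J t) by ring.
      apply derivable_pt_lim_plus; [apply derivable_pt_lim_const|].
      apply integral_derivative; auto. }
  destruct (sol_integral_equation tau (Rle_refl _)) as [I1 I2]. rewrite integral_point in I1, I2.
  split; [auto|split; [auto|split; [lra|split; [lra|]]]]. intros t Ht. split.
  - replace (G1 t (solP t) (solQ t)) with (rhs1 solP solQ t)
      by (unfold rhs1; rewrite !clip_left_eq by lra; auto).
    apply (Hloc t solP u0); auto; [intros; apply sol_integral_equation; auto|].
    intros s Hs; apply (rhs_continuous _ _ HPi HQi s Hs).
  - replace (G2 t (solP t) (solQ t)) with (rhs2 solP solQ t)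
      by (unfold rhs2; rewrite !clip_left_eq by lra; auto).
    apply (Hloc t solQ v0); auto; [intros; apply sol_integral_equation; auto|].
    intros s Hs; apply (rhs_continuous _ _ HPi HQi s Hs).
Qed.

End PicardIteration.

(* clamp a u is the projection of u onto [0, a]; it is 1-Lipschitz in u and
   continuous in (a, u), which makes the clamped rates below globally
   Lipschitz. *)
Definition clamp (a u : R) : R :=
  let m := (a + u - Rabs (a - u)) / 2 in (m + Rabs m) / 2.

Lemma clamp_spec a u : 0 <= a ->
  (u <= 0 -> clamp a u = 0) /\ (a <= u -> clamp a u = a) /\ (0 <= u <= a -> clamp a u = u)
  /\ 0 <= clamp a u <= a.
Proof.
  intros Ha. unfold clamp. destruct (Rle_dec a u).
  - rewrite (Rabs_left1 (a - u)) by lra. replace ((a + u - - (a - u)) / 2) with a by field.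
    rewrite Rabs_right by lra. repeat split; intros; lra.
  - rewrite (Rabs_right (a - u)) by lra. replace ((a + u - (a - u)) / 2) with u by field.
    destruct (Rle_dec 0 u); [rewrite Rabs_right by lra|rewrite Rabs_left by lra];
      repeat split; intros; lra.
Qed.

Lemma clamp_lipschitz a u u' : 0 <= a -> Rabs (clamp a u - clamp a u') <= Rabs (u - u').
Proof.
  intros Ha. destruct (clamp_spec a u Ha) as [A1 [A2 [A3 A4]]].
  destruct (clamp_spec a u' Ha) as [B1 [B2 [B3 B4]]].
  destruct (Rle_dec u 0); destruct (Rle_dec u' 0); destruct (Rle_dec a u); destruct (Rle_dec a u');
  repeat match goal with
  | H : ?P -> clamp a ?v = _, H' : ?P |- _ => rewrite (H H') in *; clear H
  end;
  try (rewrite A3 by lra); try (rewrite B3 by lra); try (rewrite A1 by lra); try (rewrite B1 by lra);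
  try (rewrite A2 by lra); try (rewrite B2 by lra);
  unfold Rabs; repeat destruct Rcase_abs; lra.
Qed.

Lemma clamp_continuous f g x : continuity_pt f x -> continuity_pt g x ->
  continuity_pt (fun t => clamp (f t) (g t)) x.
Proof.
  intros Hf Hg. unfold clamp.
  assert (Habs : forall h, continuity_pt h x -> continuity_pt (fun t => Rabs (h t)) x)
    by (intros h Hh; exact (continuity_pt_comp h Rabs x Hh (Rcontinuity_abs _))).
  assert (Hm : continuity_pt (fun t => (f t + g t - Rabs (f t - g t)) / 2) x).
  { apply continuity_pt_mult; [|apply continuity_pt_const; intros ? ?; auto].
    apply continuity_pt_minus; [apply continuity_pt_plus; auto|].
    apply Habs, continuity_pt_minus; auto. }
  apply continuity_pt_mult; [|apply continuity_pt_const; intros ? ?; auto].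
  apply continuity_pt_plus; auto.
Qed.

Lemma mul_bounds x X y Y : 0 <= x <= X -> 0 <= y <= Y -> 0 <= x * y <= X * Y.
Proof. intros. split; [apply Rmult_le_pos|apply Rmult_le_compat]; lra. Qed.

Lemma abs_lin a1 a2 x1 x2 K : Rabs a1 <= K -> Rabs a2 <= K ->
  Rabs (a1 * x1 + a2 * x2) <= K * (Rabs x1 + Rabs x2).
Proof.
  intros. eapply Rle_trans; [apply Rabs_triang|]. rewrite !Rabs_mult.
  pose proof (Rabs_pos x1). pose proof (Rabs_pos x2). pose proof (Rabs_pos a1). nra.
Qed.

(* After the control is switched off at time tau, y is explicit:
   y' = - Gamma lambda d y and b' = beta d give
   y t = w0 exp (- Gamma lambda / beta (b t - b tau)).  The remaining planar
   system for (xb, xd) is solved by Picard iteration, after clamping xb to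
   [0, b] and xd to [0, d] to make its rates globally Lipschitz. *)
Section SwitchedOffRates.
Variables (lambda beta Gamma tau w0 : R) (b d : R -> R).
Hypotheses (Hlam : 0 < lambda) (Hbeta : 0 < beta) (HG : 0 < Gamma <= 1) (Htau : 0 < tau)
  (Hw0 : 0 <= w0)
  (Hbds : forall s, 0 <= s -> 0 <= b s /\ 0 <= d s /\ 0 <= 1 - b s - d s)
  (Hcb : cont_from 0 b) (Hcd : cont_from 0 d).

Definition y_off (s : R) : R := w0 * exp (- (Gamma * lambda / beta) * (b s - b tau)).

Definition off_rate1 (s u v : R) : R :=
  let u' := clamp (b s) u in let v' := clamp (d s) v in
  beta * v' + lambda * (b s - u') * (u' + v' + y_off s).

Definition off_rate2 (s u v : R) : R :=
  let u' := clamp (b s) u in let v' := clamp (d s) v in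
  Gamma * lambda * (d s - v') * y_off s + Gamma * lambda * v' * (1 - b s - d s)
  + lambda * (d s - v') * (u' + v' + y_off s) - beta * v'.

Definition y_off_max : R := w0 * exp (Gamma * lambda / beta).
Definition off_const : R := (beta + lambda) * (6 + 3 * y_off_max).

Lemma y_off_tau : y_off tau = w0.
Proof. unfold y_off. rewrite Rminus_diag, Rmult_0_r, exp_0. ring. Qed.

(* 0 <= b <= 1, so y_off stays in [0, y_off_max]. *)
Lemma y_off_bounds s : 0 <= s -> 0 <= y_off s <= y_off_max.
Proof.
  intros Hs. destruct (Hbds s Hs) as [B1 [B2 B3]]. destruct (Hbds tau ltac:(lra)) as [C1 [C2 C3]].
  unfold y_off, y_off_max. split; [apply Rmult_le_pos; auto; left; apply exp_pos|].
  apply Rmult_le_compat_l; auto.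
  assert (0 < Gamma * lambda / beta) by (apply Rdiv_lt_0_compat; nra).
  assert (Hle : - (Gamma * lambda / beta) * (b s - b tau) <= Gamma * lambda / beta) by nra.
  destruct Hle as [Hlt|Heq]; [left; apply exp_increasing; auto|rewrite Heq; lra].
Qed.

Lemma y_off_max_nonneg : 0 <= y_off_max.
Proof. unfold y_off_max. apply Rmult_le_pos; auto. left; apply exp_pos. Qed.

Lemma off_const_pos : 0 < off_const.
Proof. unfold off_const. pose proof y_off_max_nonneg. apply Rmult_lt_0_compat; lra. Qed.

Lemma off_rates_bounded s u v : 0 <= s ->
  Rabs (off_rate1 s u v) <= off_const /\ Rabs (off_rate2 s u v) <= off_const.
Proof.
  intros Hs. destruct (Hbds s Hs) as [B1 [B2 B3]].
  destruct (clamp_spec (b s) u B1) as [_ [_ [_ C1]]]. destruct (clamp_spec (d s) v B2) as [_ [_ [_ C2]]].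
  destruct (y_off_bounds s Hs) as [Y1 Y2]. pose proof y_off_max_nonneg.
  unfold off_rate1, off_rate2, off_const. cbv zeta.
  set (a1 := clamp (b s) u) in *. set (a2 := clamp (d s) v) in *. set (yy := y_off s) in *.
  assert (HGl : 0 <= Gamma * lambda <= lambda) by (split; nra).
  assert (Hsum : 0 <= a1 + a2 + yy <= 2 + y_off_max) by lra.
  split; apply Rabs_le.
  - assert (T1 : 0 <= lambda * (b s - a1) <= lambda * 1) by (apply mul_bounds; lra).
    pose proof (mul_bounds _ _ _ _ T1 Hsum).
    assert (0 <= beta * a2 <= beta * 1) by (apply mul_bounds; lra).
    split; nra.
  - assert (T1 : 0 <= Gamma * lambda * (d s - a2) <= 1 * lambda * 1)
      by (apply mul_bounds; [apply mul_bounds|]; lra).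
    pose proof (mul_bounds _ _ _ _ T1 (conj Y1 Y2)).
    assert (T2 : 0 <= Gamma * lambda * a2 <= 1 * lambda * 1)
      by (apply mul_bounds; [apply mul_bounds|]; lra).
    pose proof (mul_bounds _ _ (1 - b s - d s) 1 T2 ltac:(lra)).
    assert (T3 : 0 <= lambda * (d s - a2) <= lambda * 1) by (apply mul_bounds; lra).
    pose proof (mul_bounds _ _ _ _ T3 Hsum).
    assert (0 <= beta * a2 <= beta * 1) by (apply mul_bounds; lra).
    split; nra.
Qed.

Lemma off_rates_lipschitz s u v u' v' : 0 <= s ->
  Rabs (off_rate1 s u v - off_rate1 s u' v') <= off_const * (Rabs (u - u') + Rabs (v - v')) /\
  Rabs (off_rate2 s u v - off_rate2 s u' v') <= off_const * (Rabs (u - u') + Rabs (v - v')).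
Proof.
  intros Hs. destruct (Hbds s Hs) as [B1 [B2 B3]].
  destruct (clamp_spec (b s) u B1) as [_ [_ [_ C1]]]. destruct (clamp_spec (d s) v B2) as [_ [_ [_ C2]]].
  destruct (clamp_spec (b s) u' B1) as [_ [_ [_ D1]]]. destruct (clamp_spec (d s) v' B2) as [_ [_ [_ D2]]].
  destruct (y_off_bounds s Hs) as [Y1 Y2]. pose proof y_off_max_nonneg.
  assert (L1 := clamp_lipschitz (b s) u u' B1). assert (L2 := clamp_lipschitz (d s) v v' B2).
  unfold off_rate1, off_rate2. cbv zeta.
  set (a1 := clamp (b s) u) in *. set (a2 := clamp (d s) v) in *.
  set (a1' := clamp (b s) u') in *. set (a2' := clamp (d s) v') in *. set (yy := y_off s) in *.
  assert (HGl : 0 <= Gamma * lambda <= lambda) by (split; nra).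
  assert (Hfin : forall K', 0 <= K' -> K' <= off_const -> forall X,
           Rabs X <= K' * (Rabs (a1 - a1') + Rabs (a2 - a2')) ->
           Rabs X <= off_const * (Rabs (u - u') + Rabs (v - v'))).
  { intros K' HK' HKK X HX. eapply Rle_trans; [exact HX|].
    pose proof (Rabs_pos (a1 - a1')). pose proof (Rabs_pos (a2 - a2')). nra. }
  unfold off_const in Hfin. split.
  - apply (Hfin (beta + lambda * (3 + y_off_max))); [nra|nra|].
    replace (beta * a2 + lambda * (b s - a1) * (a1 + a2 + yy)
             - (beta * a2' + lambda * (b s - a1') * (a1' + a2' + yy)))
      with ((lambda * (b s - a1) - lambda * (a1' + a2' + yy)) * (a1 - a1')
            + (beta + lambda * (b s - a1)) * (a2 - a2')) by ring.
    apply abs_lin; apply Rabs_le.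
    + assert (0 <= lambda * (b s - a1) <= lambda) by (split; nra).
      assert (0 <= lambda * (a1' + a2' + yy) <= lambda * (2 + y_off_max)) by (split; nra). nra.
    + assert (0 <= lambda * (b s - a1) <= lambda) by (split; nra). nra.
  - apply (Hfin (beta + lambda * (5 + 2 * y_off_max))); [nra|nra|].
    replace (Gamma * lambda * (d s - a2) * yy + Gamma * lambda * a2 * (1 - b s - d s) +
      lambda * (d s - a2) * (a1 + a2 + yy) - beta * a2 -
      (Gamma * lambda * (d s - a2') * yy + Gamma * lambda * a2' * (1 - b s - d s) +
      lambda * (d s - a2') * (a1' + a2' + yy) - beta * a2'))
      with ((lambda * (d s - a2)) * (a1 - a1') +
            (- (Gamma * lambda) * yy + Gamma * lambda * (1 - b s - d s) + lambda * (d s - a2)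
             - lambda * (a1' + a2' + yy) - beta) * (a2 - a2')) by ring.
    apply abs_lin; apply Rabs_le.
    + assert (0 <= lambda * (d s - a2) <= lambda) by (split; nra). nra.
    + assert (0 <= lambda * (d s - a2) <= lambda) by (split; nra).
      assert (0 <= lambda * (a1' + a2' + yy) <= lambda * (2 + y_off_max)) by (split; nra).
      assert (0 <= Gamma * lambda * yy <= lambda * y_off_max) by (split; nra).
      assert (0 <= Gamma * lambda * (1 - b s - d s) <= lambda) by (split; nra).
      nra.
Qed.

Lemma y_off_continuous s : 0 < s -> continuity_pt y_off s.
Proof.
  intros Hs. unfold y_off.
  assert (continuity_pt b s) by (apply (cont_from_interior 0); auto). reg.
Qed.

Lemma off_rates_continuous P Q s : 0 < s -> continuity_pt P s -> continuity_pt Q s ->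
  continuity_pt (fun x => off_rate1 x (P x) (Q x)) s /\
  continuity_pt (fun x => off_rate2 x (P x) (Q x)) s.
Proof.
  intros Hs HP HQ.
  assert (Hb : continuity_pt b s) by (apply (cont_from_interior 0); auto).
  assert (Hd : continuity_pt d s) by (apply (cont_from_interior 0); auto).
  assert (H1 : continuity_pt (fun x => clamp (b x) (P x)) s) by (apply clamp_continuous; auto).
  assert (H2 : continuity_pt (fun x => clamp (d x) (Q x)) s) by (apply clamp_continuous; auto).
  pose proof (y_off_continuous s Hs). unfold off_rate1, off_rate2. cbv zeta.
  split; repeat first [ assumption | apply continuity_pt_plus | apply continuity_pt_minus
                      | apply continuity_pt_mult | apply continuity_pt_opp | apply continuity_pt_const; intros ? ?; reflexivity ].
Qed.

End SwitchedOffRates.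

Section SwitchedOffSolution.
Variables (lambda beta Gamma tau u0 v0 w0 : R) (b d P Q : R -> R).
Hypotheses (Hlam : 0 < lambda) (Hbeta : 0 < beta) (HG : 0 < Gamma <= 1) (Htau : 0 < tau)
  (Hbds : forall s, 0 <= s -> 0 <= b s /\ 0 <= d s /\ 0 <= 1 - b s - d s)
  (Hbder : forall t, 0 < t -> derivable_pt_lim b t (beta * d t) /\
     derivable_pt_lim d t (- beta * d t + lambda * Gamma * d t * (1 - b t - d t)))
  (Hcb : cont_from 0 b) (Hcd : cont_from 0 d)
  (Hu0 : 0 <= u0 <= b tau) (Hv0 : 0 <= v0 <= d tau) (Hw0 : 0 <= w0)
  (HPc : cont_from tau P) (HQc : cont_from tau Q) (HP0 : P tau = u0) (HQ0 : Q tau = v0)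
  (HPQ : forall t, tau < t ->
     derivable_pt_lim P t (off_rate1 lambda beta Gamma tau w0 b d t (P t) (Q t)) /\
     derivable_pt_lim Q t (off_rate2 lambda beta Gamma tau w0 b d t (P t) (Q t))).

Definition off_family (j : nat) : R -> R :=
  match j with O => P | 1 => Q | 2 => fun t => b t - P t | _ => fun t => d t - Q t end.

(* The clamped solution stays in 0 <= P <= b, 0 <= Q <= d: when a component
   leaves this box, its clamped rate pushes it back. *)
Lemma off_family_rates : quasi_positive_rates tau off_family 4.
Proof.
  intros K. exists 0, nil. split; [lra|]. intros t Ht _ i Hi Hneg.
  destruct (HPQ t ltac:(lra)) as [D1 D2]. destruct (Hbder t ltac:(lra)) as [Db Dd].
  destruct (Hbds t ltac:(lra)) as [B1 [B2 B3]].
  destruct (y_off_bounds lambda beta Gamma tau w0 b d Hlam Hbeta HG Htau Hw0 Hbds t ltac:(lra)) as [Y1 _].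
  pose proof (negsum_ge0 off_family 4 t).
  destruct (clamp_spec (b t) (P t) B1) as [A1 [A2 [_ A4]]].
  destruct (clamp_spec (d t) (Q t) B2) as [E1 [E2 [_ E4]]].
  assert (HGl : 0 <= Gamma * lambda) by nra.
  unfold off_rate1, off_rate2 in D1, D2. cbv zeta in D1, D2.
  destruct i as [|[|[|[|i]]]]; simpl in Hneg; try lia.
  - eexists; split; [exact D1|]. rewrite A1 by lra.
    assert (0 <= lambda * (b t - 0) * (0 + clamp (d t) (Q t) + y_off lambda beta Gamma tau w0 b t))
      by (apply Rmult_le_pos; nra).
    nra.
  - eexists; split; [exact D2|]. rewrite E1 by lra.
    assert (0 <= Gamma * lambda * (d t - 0) * y_off lambda beta Gamma tau w0 b t)
      by (apply Rmult_le_pos; nra).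
    assert (0 <= lambda * (d t - 0) * (clamp (b t) (P t) + 0 + y_off lambda beta Gamma tau w0 b t))
      by (apply Rmult_le_pos; nra).
    nra.
  - eexists; split; [apply derivable_pt_lim_minus; [exact Db|exact D1]|]. rewrite A2 by lra. nra.
  - eexists; split; [apply derivable_pt_lim_minus; [exact Dd|exact D2]|]. rewrite E2 by lra. nra.
Qed.

Lemma off_invariant t : tau <= t -> 0 <= P t <= b t /\ 0 <= Q t <= d t.
Proof.
  assert (Hcb' := cont_from_later 0 tau b Hcb ltac:(lra)).
  assert (Hcd' := cont_from_later 0 tau d Hcd ltac:(lra)).
  intros Ht.
  assert (H : forall i, (i < 4)%nat -> 0 <= off_family i t).
  { intros i Hi. apply (quasi_positivity tau off_family 4); auto.
    - intros [|[|[|[|j]]]] Hj; simpl; try lia; auto; apply cont_from_minus; auto.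
    - exact off_family_rates.
    - intros [|[|[|[|j]]]] Hj; simpl; try lia; rewrite ?HP0, ?HQ0; lra. }
  pose proof (H 0%nat ltac:(lia)). pose proof (H 1%nat ltac:(lia)).
  pose proof (H 2%nat ltac:(lia)). pose proof (H 3%nat ltac:(lia)). simpl in *. lra.
Qed.

Lemma y_off_derivative t : 0 < t ->
  derivable_pt_lim (y_off lambda beta Gamma tau w0 b) t
    (- Gamma * lambda * d t * y_off lambda beta Gamma tau w0 b t).
Proof.
  intros Ht. destruct (Hbder t Ht) as [Db _]. unfold y_off.
  set (c := - (Gamma * lambda / beta)).
  assert (H1 : derivable_pt_lim (fun x => c * (b x - b tau)) t (c * (beta * d t - 0))).
  { apply (derivable_pt_lim_scal (fun x => b x - b tau) c t).
    apply derivable_pt_lim_minus; auto. apply derivable_pt_lim_const. }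
  pose proof (derivable_pt_lim_scal _ w0 t _
    (derivable_pt_lim_comp _ exp t _ _ H1 (derivable_pt_lim_exp _))) as H3.
  replace (- Gamma * lambda * d t * (w0 * exp (c * (b t - b tau)))) with
    (w0 * (exp (c * (b t - b tau)) * (c * (beta * d t - 0)))) by (unfold c; field; lra).
  exact H3.
Qed.

(* Inside the box the clamps are inactive, so (P, Q, y_off) solves the
   controlled system with the control switched off. *)
Lemma off_solution_derivatives t : tau < t ->
  derivable_pt_lim P t (beta * Q t + lambda * (b t - P t) * (P t + Q t + y_off lambda beta Gamma tau w0 b t)) /\
  derivable_pt_lim Q t (Gamma * lambda * (d t - Q t) * y_off lambda beta Gamma tau w0 b t
       + Gamma * lambda * Q t * (1 - b t - d t)
       + lambda * (d t - Q t) * (P t + Q t + y_off lambda beta Gamma tau w0 b t) - beta * Q t) /\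
  derivable_pt_lim (y_off lambda beta Gamma tau w0 b) t
    (- Gamma * lambda * d t * y_off lambda beta Gamma tau w0 b t
     + lambda * 0 * ((1 - b t - d t) - y_off lambda beta Gamma tau w0 b t)
       * (P t + y_off lambda beta Gamma tau w0 b t + (1 - Gamma) * Q t)).
Proof.
  intros Ht. destruct (HPQ t Ht) as [D1 D2]. destruct (off_invariant t ltac:(lra)) as [[P1 P2] [Q1 Q2]].
  destruct (Hbds t ltac:(lra)) as [B1 [B2 B3]].
  destruct (clamp_spec (b t) (P t) B1) as [_ [_ [A3 _]]].
  destruct (clamp_spec (d t) (Q t) B2) as [_ [_ [E3 _]]].
  unfold off_rate1, off_rate2 in D1, D2. cbv zeta in D1, D2. rewrite A3, E3 in D1, D2 by lra.
  split; [|split].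
  - exact D1.
  - exact D2.
  - rewrite Rmult_0_r, !Rmult_0_l, Rplus_0_r. apply y_off_derivative. lra.
Qed.

End SwitchedOffSolution.

Definition glue (f g : R -> R) (tau : R) (t : R) : R := if Rle_dec t tau then f t else g t.

Lemma glue_l f g tau t : t <= tau -> glue f g tau t = f t.
Proof. intros; unfold glue; destruct (Rle_dec t tau); auto; lra. Qed.

Lemma glue_r f g tau t : tau < t -> glue f g tau t = g t.
Proof. intros; unfold glue; destruct (Rle_dec t tau); auto; lra. Qed.

Lemma glue_cont f g tau : 0 < tau -> cont_from 0 f -> cont_from tau g -> f tau = g tau ->
  cont_from 0 (glue f g tau).
Proof.
  intros Ht Hf Hg He t Ht0 eps Heps. unfold glue.
  destruct (Rlt_le_dec t tau) as [Hlt|Hge].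
  - destruct (Hf t Ht0 eps Heps) as [alp [Ha Hal]].
    exists (Rmin alp (tau - t)). split; [apply Rmin_pos; lra|].
    intros x [Hx1 Hx2]. simpl in *. unfold R_dist in *.
    pose proof (Rmin_l alp (tau - t)). pose proof (Rmin_r alp (tau - t)).
    apply Rabs_def2 in Hx2.
    destruct (Rle_dec x tau); [|lra]. destruct (Rle_dec t tau); [|lra].
    apply Hal. split; auto. simpl; unfold R_dist. apply Rabs_def1; lra.
  - destruct (Req_dec t tau) as [->|ne].
    + destruct (Hf tau Ht0 eps Heps) as [a1 [Ha1 Hal1]].
      destruct (Hg tau (Rle_refl _) eps Heps) as [a2 [Ha2 Hal2]].
      exists (Rmin a1 a2). split; [apply Rmin_pos; lra|].
      intros x [Hx1 Hx2]. simpl in *. unfold R_dist in *.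
      pose proof (Rmin_l a1 a2). pose proof (Rmin_r a1 a2).
      destruct (Rle_dec tau tau); [|lra]. destruct (Rle_dec x tau).
      * apply Hal1. split; auto. simpl; unfold R_dist. lra.
      * rewrite He. apply Hal2. split; [unfold D_x in *; lra|]. simpl; unfold R_dist. lra.
    + destruct (Hg t Hge eps Heps) as [alp [Ha Hal]].
      exists (Rmin alp (t - tau)). split; [apply Rmin_pos; lra|].
      intros x [Hx1 Hx2]. simpl in *. unfold R_dist in *.
      pose proof (Rmin_l alp (t - tau)). pose proof (Rmin_r alp (t - tau)).
      apply Rabs_def2 in Hx2.
      destruct (Rle_dec x tau); [lra|]. destruct (Rle_dec t tau); [lra|].
      apply Hal. split; [unfold D_x in *; lra|]. simpl; unfold R_dist. apply Rabs_def1; lra.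
Qed.

Lemma glue_derivable_left f g tau t l : t < tau -> derivable_pt_lim f t l ->
  derivable_pt_lim (glue f g tau) t l.
Proof.
  intros Ht Hd. apply is_derive_Reals. apply is_derive_Reals in Hd.
  apply (is_derive_ext_loc f); [|exact Hd].
  exists (mkposreal (tau - t) ltac:(lra)). intros x Hx.
  unfold ball in Hx; simpl in Hx; unfold AbsRing_ball, abs, minus, plus, opp in Hx; simpl in Hx.
  apply Rabs_def2 in Hx. rewrite glue_l; auto; lra.
Qed.

Lemma glue_derivable_right f g tau t l : tau < t -> derivable_pt_lim g t l ->
  derivable_pt_lim (glue f g tau) t l.
Proof.
  intros Ht Hd. apply is_derive_Reals. apply is_derive_Reals in Hd.
  apply (is_derive_ext_loc g); [|exact Hd].
  exists (mkposreal (t - tau) ltac:(lra)). intros x Hx.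
  unfold ball in Hx; simpl in Hx; unfold AbsRing_ball, abs, minus, plus, opp in Hx; simpl in Hx.
  apply Rabs_def2 in Hx. rewrite glue_r; auto; lra.
Qed.

Lemma switch_off_extension (lambda beta Gamma d0 xd0 : R) (b d xb xd y : R -> R) :
  0 < lambda -> 0 < beta -> 0 < Gamma <= 1 -> 0 < xd0 <= d0 -> d0 < 1 ->
  SolBD lambda beta Gamma d0 b d ->
  SolX lambda beta Gamma xd0 b d (threshold None) xb xd y ->
  forall tau, 0 < tau -> exists xb2 xd2 y2,
    SolX lambda beta Gamma xd0 b d (threshold (Some tau)) xb2 xd2 y2 /\
    forall t, 0 <= t <= tau -> xb2 t = xb t /\ xd2 t = xd t /\ y2 t = y t.
Proof.
  intros Hlam Hbeta HG Hx0 Hd0 Hbd Hsol tau Htau.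
  assert (Hbds : forall s, 0 <= s -> 0 <= b s /\ 0 <= d s /\ 0 <= 1 - b s - d s)
    by (intros s Hs; apply (epidemic_nonneg lambda beta Gamma d0 b d); auto; lra).
  assert (Inv := controlled_invariant lambda beta Gamma d0 xd0 b d (threshold None) xb xd y
                   Hlam Hbeta HG Hx0 Hd0 Hbd (fun t _ => threshold_range None t)
                   (threshold_piecewise_continuous None) Hsol).
  pose proof (Inv 0%nat tau ltac:(lia) ltac:(lra)). pose proof (Inv 1%nat tau ltac:(lia) ltac:(lra)).
  pose proof (Inv 2%nat tau ltac:(lia) ltac:(lra)). pose proof (Inv 3%nat tau ltac:(lia) ltac:(lra)).
  pose proof (Inv 4%nat tau ltac:(lia) ltac:(lra)). simpl in *.
  destruct Hbd as [Hb0 [Hdd0 [Hcb [Hcd Hbder]]]].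
  set (w0 := y tau). assert (Hw0 : 0 <= w0) by (unfold w0; lra).
  destruct (picard_global_existence tau (xb tau) (xd tau) (off_const lambda beta Gamma w0)
              (off_rate1 lambda beta Gamma tau w0 b d) (off_rate2 lambda beta Gamma tau w0 b d))
    as [P [Q [HPc [HQc [HP0 [HQ0 HPQ]]]]]]; auto.
  { apply off_const_pos; auto. }
  { intros; eapply off_rates_bounded; eauto. }
  { intros; eapply off_rates_lipschitz; eauto. }
  { intros; eapply off_rates_continuous; eauto. }
  assert (HAfter := off_solution_derivatives lambda beta Gamma tau (xb tau) (xd tau) w0 b d P Q
                      Hlam Hbeta HG Htau Hbds Hbder Hcb Hcd ltac:(lra) ltac:(lra) Hw0 HPc HQc HP0 HQ0 HPQ).
  set (Y := y_off lambda beta Gamma tau w0 b) in HAfter.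
  assert (HcY : cont_from tau Y).
  { apply cont_from_of_continuity. intros; apply y_off_continuous; auto; lra. }
  destruct Hsol as [Hxb0 [Hxd0 [Hy0 [Hcxb [Hcxd [Hcy Hder]]]]]].
  exists (glue xb P tau), (glue xd Q tau), (glue y Y tau). split.
  - refine (conj _ (conj _ (conj _ (conj _ (conj _ (conj _ _))))));
      try (rewrite glue_l by lra; auto); try (apply glue_cont; auto; unfold Y; rewrite y_off_tau; auto).
    intros t Ht Hct. cbv zeta.
    destruct (Req_dec t tau) as [->|ne]; [exfalso; apply (threshold_discontinuous tau); auto|].
    destruct (Rlt_le_dec t tau) as [Hlt|Hge].
    + rewrite !glue_l by lra.
      destruct (Hder t Ht (threshold_none_continuous t)) as [D1 [D2 D3]].
      replace (threshold (Some tau) t) with (threshold None t) by (simpl; destruct (Rlt_dec t tau); lra).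
      split; [|split]; apply glue_derivable_left; auto.
    + rewrite !glue_r by lra.
      replace (threshold (Some tau) t) with 0 by (simpl; destruct (Rlt_dec t tau); lra).
      destruct (HAfter t ltac:(lra)) as [D1 [D2 D3]].
      split; [|split]; apply glue_derivable_right; auto; lra.
  - intros t Ht. rewrite !glue_l by lra. auto.
Qed.

Lemma threshold_trajectory_dominates (lambda beta Gamma d0 xd0 : R) (b d sigma xb xd y xb' xd' y' : R -> R)
  (tauhat : option R) :
  0 < lambda -> 0 < beta -> 0 < Gamma <= 1 -> 0 < xd0 <= d0 -> d0 < 1 ->
  SolBD lambda beta Gamma d0 b d -> admissible sigma -> SupPosTime sigma tauhat ->
  SolX lambda beta Gamma xd0 b d sigma xb xd y ->
  SolX lambda beta Gamma xd0 b d (threshold tauhat) xb' xd' y' ->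
  forall t, 0 <= t -> xb t + xd t <= xb' t + xd' t.
Proof.
  intros Hlam Hbeta HG Hx0 Hd0 Hbd Hadm Htau Hsol Hsol' t Ht.
  assert (Hs : forall t, 0 <= t -> 0 <= sigma t <= 1) by (destruct Hadm; auto).
  assert (Cmp := comparison lambda beta Gamma d0 xd0 b d sigma (threshold tauhat) xb xd y xb' xd' y'
                   Hlam Hbeta HG Hx0 Hd0 Hbd Hs (admissible_piecewise_continuous sigma Hadm) Hsol
                   (fun t _ => threshold_range tauhat t) (threshold_piecewise_continuous tauhat) Hsol'
                   (fun t Ht _ Hc => threshold_dominates sigma tauhat Hs Htau t Ht Hc)).
  pose proof (Cmp 0%nat t ltac:(lia) Ht). pose proof (Cmp 1%nat t ltac:(lia) Ht). simpl in *. lra.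
Qed.

(* For a finite switch-off time this is the definition of rho_max;
   for the control sigma = 1, switching off just after the target time does
   not change the trajectory up to that time. *)
Lemma threshold_terminal_le_rho_max (lambda beta Gamma d0 xd0 alpha ainf rho_max : R)
  (b d sigma xb' xd' y' : R -> R) (tauhat : option R) (T' : R) :
  0 < lambda -> 0 < beta -> 0 < Gamma <= 1 -> 0 < xd0 <= d0 -> d0 < 1 ->
  SolBD lambda beta Gamma d0 b d ->
  is_lub (RhoSet lambda beta Gamma xd0 alpha ainf b d) rho_max ->
  SupPosTime sigma tauhat ->
  SolX lambda beta Gamma xd0 b d (threshold tauhat) xb' xd' y' ->
  IsTargetTime (fun t => xb' t + xd' t) (alpha * ainf) T' ->
  y' T' <= rho_max.
Proof.
  intros Hlam Hbeta HG Hx0 Hd0 Hbd [Hub _] Htau Hsol' HT'. apply Hub.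
  destruct tauhat as [r|].
  - exists r, xb', xd', y', T'.
    exact (conj (sup_pos_time_nonneg sigma r Htau) (conj Hsol' (conj HT' eq_refl))).
  - pose proof (target_nonneg _ _ _ HT') as HT0.
    destruct (switch_off_extension lambda beta Gamma d0 xd0 b d xb' xd' y'
                Hlam Hbeta HG Hx0 Hd0 Hbd Hsol' (T' + 1) ltac:(lra)) as [xb2 [xd2 [y2 [Hsol2 Heq]]]].
    exists (T' + 1), xb2, xd2, y2, T'. refine (conj _ (conj Hsol2 (conj _ _))); [lra| |].
    + apply (target_time_local (fun t => xb' t + xd' t) _ _ _ (T' + 1)); auto; try lra.
      * destruct Hsol' as [_ [_ [_ [Hc1 [Hc2 _]]]]]. apply cont_from_plus; auto.
      * intros t Ht. destruct (Heq t Ht) as [-> [-> _]]. auto.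
    + destruct (Heq T' ltac:(lra)) as [_ [_ ->]]. auto.
Qed.

Theorem lemma7
  (lambda beta Gamma d0 xd0 alpha psi : R)
  (Hlam : 0 < lambda) (Hbeta : 0 < beta) (HG : 0 < Gamma <= 1)
  (Hx0 : 0 < xd0 <= d0) (Hd0 : d0 < 1)
  (Halpha : 0 < alpha < 1) (Hpsi : 0 < psi)
  (b d : R -> R) (Hbd : SolBD lambda beta Gamma d0 b d)
  (ainf : R) (Hainf : lim_infty (fun t => b t + d t) ainf)
  (rho_max : R)
  (Hrho : is_lub (RhoSet lambda beta Gamma xd0 alpha ainf b d) rho_max)
  (sigma : R -> R) (Hadm : admissible sigma)
  (xb xd y : R -> R) (Hsol : SolX lambda beta Gamma xd0 b d sigma xb xd y)
  (T : R) (HT : IsTargetTime (fun t => xb t + xd t) (alpha * ainf) T)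
  (Hgt : y T > rho_max)
  (tauhat : option R) (Htau : SupPosTime sigma tauhat) :
  forall xb' xd' y' : R -> R,
    SolX lambda beta Gamma xd0 b d (threshold tauhat) xb' xd' y' ->
    exists T' : R,
      IsTargetTime (fun t => xb' t + xd' t) (alpha * ainf) T' /\
      psi * y' T' + T' < psi * y T + T.
Proof.
  intros xb' xd' y' Hsol'.
  destruct (target_time_monotone _ _ _ _ HT
              (threshold_trajectory_dominates lambda beta Gamma d0 xd0 b d sigma xb xd y xb' xd' y'
                 tauhat Hlam Hbeta HG Hx0 Hd0 Hbd Hadm Htau Hsol Hsol')) as [T' [HT' HTT']].
  exists T'. split; auto.
  pose proof (threshold_terminal_le_rho_max lambda beta Gamma d0 xd0 alpha ainf rho_max b d sigma
                xb' xd' y' tauhat T' Hlam Hbeta HG Hx0 Hd0 Hbd Hrho Htau Hsol' HT').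
  nra.
Qed.
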